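(* Let $k_1,k_2,m$ be positive integers. The map $\Lambda:J^1_{k,m}(\mathcal O_K)\to J_{k,m}(\mathcal O_K)$, $\phi\mapsto\sum_{\epsilon\in\mathcal O_K^\times}\phi|_k\epsilon I$ (with $k=k_1+k_2$), is well defined, and the bilinear map $H$ induces a linear map $H:J_{k_1,m}\otimes J_{k_2,m}\to J^1_{k_1+k_2,m}(\mathcal O_K)$, so that the composite $$J_{k_1,m}\otimes J_{k_2,m}\xrightarrow{H}J^1_{k_1+k_2,m}(\mathcal O_K)\xrightarrow{\Lambda}J_{k_1+k_2,m}(\mathcal O_K)$$ is a linear map which maps tensor products of cusp forms to cusp forms.
   Context: Notation: $\mathcal H$ is the upper half plane, $e(x)=e^{2\pi i x}$, $K=\mathbb Q(i)$, $\mathcal O_K=\mathbb Z[i]$, $\mathcal O_K^\times=\{\pm1,\pm i\}$, $N(x)=x\bar x$, $\mathcal O_K^\sharp=\frac i2\mathcal O_K$. $J_{k,m}$ is the space of classical (Eichler–Zagier) Jacobi forms of weight $k$, index $m$. For $\psi$ on $\mathcal H\times\mathbb C^2$ and $\epsilon\in\mathcal O_K^\times$, $(\psi|_k\epsilon I)(\tau,z_1,z_2)=\epsilon^{-k}\psi(\tau,\epsilon z_1,\bar\epsilon z_2)$. For $\epsilon\in\mathcal O_K^\times$, $M=\begin{pmatrix}a&b\\c&d\end{pmatrix}\in SL(2,\mathbb Z)$: $(\phi|_{k,m}\epsilon M)(\tau,z_1,z_2)=\epsilon^{-k}(c\tau+d)^{-k}e^{-2\pi i m c z_1z_2/(c\tau+d)}\phi\bigl(M\tau,\tfrac{\epsilon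 z_1}{c\tau+d},\tfrac{\bar\epsilon z_2}{c\tau+d}\bigr)$; for $\lambda,\mu\in\mathcal O_K$, $(\phi|_m[\lambda,\mu])(\tau,z_1,z_2)=e^{2\pi i m(N(\lambda)\tau+\bar\lambda z_1+\lambda z_2)}\phi(\tau,z_1+\lambda\tau+\mu,z_2+\bar\lambda\tau+\bar\mu)$. $J_{k,m}(\mathcal O_K)$ (resp. $J^1_{k,m}(\mathcal O_K)$) is the space of holomorphic $\phi$ on $\mathcal H\times\mathbb C^2$ with $\phi|_{k,m}\epsilon M=\phi$ for all $\epsilon\in\mathcal O_K^\times$ (resp. only $\epsilon=1$) and all $M\in SL(2,\mathbb Z)$, $\phi|_m[\lambda,\mu]=\phi$ for all $\lambda,\mu\in\mathcal O_K$, and with a Fourier expansion $\sum_{n\ge0}\sum_{r\in\mathcal O_K^\sharp,\,nm\ge N(r)}c_\phi(n,r)e(n\tau+rz_1+\bar rz_2)$; cusp forms are those with $c_\phi(n,r)=0$ whenever $nm=N(r)$. For $\phi_1\in J_{k_1,m}$, $\phi_2\in J_{k_2,m}$, $H(\phi_1,\phi_2)(\tau,z_1,z_2)=\sum_{\epsilon\in\mathcal O_K^\times}\bigl(\phi_1(\tau,\frac12(z_1+z_2))\phi_2(\tau,\frac i2(z_1-z_2))\bigr)|_{k_1+k_2}\epsilon I$. *)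

From Stdlib Require Import Reals ZArith List.
Open Scope R_scope.

Record C := mkC { Re : R ; Im : R }.

Definition C0 : C := mkC 0 0.
Definition C1 : C := mkC 1 0.
Definition Ci : C := mkC 0 1.
Definition RtoC (x : R) : C := mkC x 0.
Definition ZtoC (n : Z) : C := RtoC (IZR n).
Definition NtoC (n : nat) : C := RtoC (INR n).
Definition Cadd (z w : C) : C := mkC (Re z + Re w) (Im z + Im w).
Definition Copp (z : C) : C := mkC (- Re z) (- Im z).
Definition Csub (z w : C) : C := Cadd z (Copp w).
Definition Cmul (z w : C) : C :=
  mkC (Re z * Re w - Im z * Im w) (Re z * Im w + Im z * Re w).
Definition Cinv (z : C) : C :=
  let d := Re z * Re z + Im z * Im z in mkC (Re z / d) (- Im z / d).
Definition Cdiv (z w : C) : C := Cmul z (Cinv w).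
Definition Cconj (z : C) : C := mkC (Re z) (- Im z).
Definition Cabs (z : C) : R := sqrt (Re z * Re z + Im z * Im z).
Fixpoint Cpow (z : C) (n : nat) : C :=
  match n with O => C1 | S n' => Cmul z (Cpow z n') end.
Definition Cexp (z : C) : C :=
  mkC (exp (Re z) * cos (Im z)) (exp (Re z) * sin (Im z)).
Definition ee (z : C) : C := Cexp (Cmul (mkC 0 (2 * PI)) z).

Definition Csum {A : Type} (f : A -> C) (l : list A) : C :=
  fold_right (fun a acc => Cadd (f a) acc) C0 l.
Definition Rsum {A : Type} (f : A -> R) (l : list A) : R :=
  fold_right (fun a acc => f a + acc) 0 l.

Definition Ccv (u : nat -> C) (l : C) : Prop :=
  Un_cv (fun n => Re (u n)) (Re l) /\ Un_cv (fun n => Im (u n)) (Im l).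

Definition Cdifferentiable (f : C -> C) (z : C) : Prop :=
  exists L : C, forall eps, 0 < eps -> exists delta, 0 < delta /\
    forall h : C, 0 < Cabs h -> Cabs h < delta ->
      Cabs (Csub (Cdiv (Csub (f (Cadd z h)) (f z)) h) L) < eps.

Definition inH (t : C) : Prop := 0 < Im t.

Definition holo2 (f : C -> C -> C) : Prop :=
  forall t z, inH t ->
    (forall eps, 0 < eps -> exists delta, 0 < delta /\
       forall t' z', Cabs (Csub t' t) < delta -> Cabs (Csub z' z) < delta ->
         Cabs (Csub (f t' z') (f t z)) < eps) /\
    Cdifferentiable (fun u => f u z) t /\
    Cdifferentiable (fun u => f t u) z.

Definition holo3 (f : C -> C -> C -> C) : Prop :=
  forall t z1 z2, inH t ->
    (forall eps, 0 < eps -> exists delta, 0 < delta /\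
       forall t' z1' z2', Cabs (Csub t' t) < delta -> Cabs (Csub z1' z1) < delta ->
         Cabs (Csub z2' z2) < delta ->
         Cabs (Csub (f t' z1' z2') (f t z1 z2)) < eps) /\
    Cdifferentiable (fun u => f u z1 z2) t /\
    Cdifferentiable (fun u => f t u z2) z1 /\
    Cdifferentiable (fun u => f t z1 u) z2.

Definition zrange (B : nat) : list Z :=
  map (fun k => (Z.of_nat k - Z.of_nat B)%Z) (seq 0 (2 * B + 1)).

Definition moebius (a b c d : Z) (t : C) : C :=
  Cdiv (Cadd (Cmul (ZtoC a) t) (ZtoC b)) (Cadd (Cmul (ZtoC c) t) (ZtoC d)).

Definition slash_cl (k m : nat) (a b c d : Z) (phi : C -> C -> C) : C -> C -> C :=
  fun t z =>
    let j := Cadd (Cmul (ZtoC c) t) (ZtoC d) in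
    Cmul (Cinv (Cpow j k))
      (Cmul (ee (Copp (Cdiv (Cmul (Cmul (NtoC m) (ZtoC c)) (Cmul z z)) j)))
            (phi (moebius a b c d t) (Cdiv z j))).

Definition heis_cl (m : nat) (l mu : Z) (phi : C -> C -> C) : C -> C -> C :=
  fun t z =>
    Cmul (ee (Cmul (NtoC m) (Cadd (Cmul (ZtoC (l * l)) t) (Cmul (ZtoC (2 * l)) z))))
         (phi t (Cadd (Cadd z (Cmul (ZtoC l) t)) (ZtoC mu))).

Definition cl_range (m n : nat) : list Z :=
  filter (fun r => Z.leb (r * r) (4 * Z.of_nat n * Z.of_nat m))
         (zrange (2 * n * m + 1)).

Definition cl_term (c : nat -> Z -> C) (t z : C) (n : nat) (r : Z) : C :=
  Cmul (c n r) (ee (Cadd (Cmul (NtoC n) t) (Cmul (ZtoC r) z))).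

Definition HasFourier_cl (m : nat) (phi : C -> C -> C) (c : nat -> Z -> C) : Prop :=
  forall t z, inH t ->
    Ccv (fun N => Csum (fun n => Csum (cl_term c t z n) (cl_range m n)) (seq 0 (S N)))
        (phi t z) /\
    exists M, forall N,
      Rsum (fun n => Rsum (fun r => Cabs (cl_term c t z n r)) (cl_range m n)) (seq 0 (S N))
      <= M.

Definition jacobi_cl_inv (k m : nat) (phi : C -> C -> C) : Prop :=
  holo2 phi /\
  (forall a b c d : Z, (a * d - b * c = 1)%Z ->
     forall t z, inH t -> slash_cl k m a b c d phi t z = phi t z) /\
  (forall l mu : Z, forall t z, inH t -> heis_cl m l mu phi t z = phi t z).

Definition JacobiForm_cl (k m : nat) (phi : C -> C -> C) : Prop :=
  jacobi_cl_inv k m phi /\ exists c, HasFourier_cl m phi c.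

Definition JacobiCusp_cl (k m : nat) (phi : C -> C -> C) : Prop :=
  jacobi_cl_inv k m phi /\
  exists c, HasFourier_cl m phi c /\
    forall n r, (4 * Z.of_nat n * Z.of_nat m = r * r)%Z -> c n r = C0.

Definition gauss (a b : Z) : C := mkC (IZR a) (IZR b).
Definition unitsOK : list C := C1 :: Copp C1 :: Ci :: Copp Ci :: nil.
Definition Nrm (x : C) : C := Cmul x (Cconj x).

Definition slashI (k : nat) (eps : C) (psi : C -> C -> C -> C) : C -> C -> C -> C :=
  fun t z1 z2 => Cmul (Cinv (Cpow eps k)) (psi t (Cmul eps z1) (Cmul (Cconj eps) z2)).

Definition slashK (k m : nat) (eps : C) (a b c d : Z) (phi : C -> C -> C -> C)
  : C -> C -> C -> C :=
  fun t z1 z2 =>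
    let j := Cadd (Cmul (ZtoC c) t) (ZtoC d) in
    Cmul (Cinv (Cpow eps k))
     (Cmul (Cinv (Cpow j k))
      (Cmul (ee (Copp (Cdiv (Cmul (Cmul (NtoC m) (ZtoC c)) (Cmul z1 z2)) j)))
            (phi (moebius a b c d t) (Cdiv (Cmul eps z1) j)
                 (Cdiv (Cmul (Cconj eps) z2) j)))).

Definition heisK (m : nat) (l mu : C) (phi : C -> C -> C -> C) : C -> C -> C -> C :=
  fun t z1 z2 =>
    Cmul (ee (Cmul (NtoC m)
                (Cadd (Cadd (Cmul (Nrm l) t) (Cmul (Cconj l) z1)) (Cmul l z2))))
         (phi t (Cadd (Cadd z1 (Cmul l t)) mu)
                (Cadd (Cadd z2 (Cmul (Cconj l) t)) (Cconj mu))).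

(* r in O_K^# = (i/2) O_K is written r = (x + i y)/2 with x, y in Z;
   N(r) <= nm iff x^2 + y^2 <= 4nm *)
Definition rK (xy : Z * Z) : C := mkC (IZR (fst xy) / 2) (IZR (snd xy) / 2).
Definition K_range (m n : nat) : list (Z * Z) :=
  filter (fun xy => Z.leb (fst xy * fst xy + snd xy * snd xy)
                          (4 * Z.of_nat n * Z.of_nat m))
         (list_prod (zrange (2 * n * m + 1)) (zrange (2 * n * m + 1))).

Definition K_term (c : nat -> Z * Z -> C) (t z1 z2 : C) (n : nat) (xy : Z * Z) : C :=
  Cmul (c n xy)
       (ee (Cadd (Cadd (Cmul (NtoC n) t) (Cmul (rK xy) z1)) (Cmul (Cconj (rK xy)) z2))).

Definition HasFourier_K (m : nat) (phi : C -> C -> C -> C) (c : nat -> Z * Z -> C)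
  : Prop :=
  forall t z1 z2, inH t ->
    Ccv (fun N => Csum (fun n => Csum (K_term c t z1 z2 n) (K_range m n)) (seq 0 (S N)))
        (phi t z1 z2) /\
    exists M, forall N,
      Rsum (fun n => Rsum (fun xy => Cabs (K_term c t z1 z2 n xy)) (K_range m n))
           (seq 0 (S N)) <= M.

Definition jacobiK_inv (units : list C) (k m : nat) (phi : C -> C -> C -> C) : Prop :=
  holo3 phi /\
  (forall eps, In eps units -> forall a b c d : Z, (a * d - b * c = 1)%Z ->
     forall t z1 z2, inH t -> slashK k m eps a b c d phi t z1 z2 = phi t z1 z2) /\
  (forall a b a' b' : Z, forall t z1 z2, inH t ->
     heisK m (gauss a b) (gauss a' b') phi t z1 z2 = phi t z1 z2).

Definition JacobiForm_K (k m : nat) (phi : C -> C -> C -> C) : Prop :=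
  jacobiK_inv unitsOK k m phi /\ exists c, HasFourier_K m phi c.

Definition JacobiForm1_K (k m : nat) (phi : C -> C -> C -> C) : Prop :=
  jacobiK_inv (C1 :: nil) k m phi /\ exists c, HasFourier_K m phi c.

Definition JacobiCusp_K (k m : nat) (phi : C -> C -> C -> C) : Prop :=
  jacobiK_inv unitsOK k m phi /\
  exists c, HasFourier_K m phi c /\
    forall n xy, (fst xy * fst xy + snd xy * snd xy = 4 * Z.of_nat n * Z.of_nat m)%Z ->
      c n xy = C0.

Definition LambdaK (k : nat) (phi : C -> C -> C -> C) : C -> C -> C -> C :=
  fun t z1 z2 => Csum (fun eps => slashI k eps phi t z1 z2) unitsOK.

Definition Hmap (k1 k2 : nat) (phi1 phi2 : C -> C -> C) : C -> C -> C -> C :=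
  fun t z1 z2 =>
    Csum (fun eps =>
      slashI (k1 + k2) eps
        (fun t' w1 w2 =>
           Cmul (phi1 t' (Cmul (mkC (1/2) 0) (Cadd w1 w2)))
                (phi2 t' (Cmul (mkC 0 (1/2)) (Csub w1 w2))))
        t z1 z2) unitsOK.

Definition lin2 (a : C) (f g : C -> C -> C) : C -> C -> C :=
  fun t z => Cadd (Cmul a (f t z)) (g t z).
Definition lin3 (a : C) (f g : C -> C -> C -> C) : C -> C -> C -> C :=
  fun t z1 z2 => Cadd (Cmul a (f t z1 z2)) (g t z1 z2).

(** The argument proper has three parts.
    - Fourier expansions: multiplying by a unit rotates the index lattice
      [O_K^#], so [phi |_k eps I] keeps an expansion with the same vanishing
      coefficients; the expansion of [psi = phi1((z1+z2)/2) phi2(i(z1-z2)/2)] is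
      the Cauchy product of the classical ones, and its boundary coefficients
      vanish when those of [phi1] do.
    - Transformation laws: [psi] inherits invariance under [M] and [[lambda,mu]]
      from [phi1] and [phi2]; slashing by a unit [eta] intertwines [eps M] with
      [M] and [[lambda,mu]] with [[eta lambda, eta mu]], so averaging over the
      units produces invariance under every [eps M].
    - The theorem assembles these facts for [H] and [Lambda]. *)

From Pilot Require Import Defs.
From Stdlib Require Import Reals ZArith List Lra Lia Psatz Permutation FunctionalExtensionality.
Import Defs.
Open Scope R_scope.

(** * Complex arithmetic *)

Lemma Ceq (z w : C) : Re z = Re w -> Im z = Im w -> z = w.
Proof. destruct z, w; simpl; intros -> ->; reflexivity. Qed.

(* Reduce an identity between explicit complex expressions to real parts. *)
Ltac cexpand :=
  unfold Csub, Cdiv, Nrm, rK, ZtoC, NtoC, Cadd, Cmul, Copp, Cconj, C0, C1, Ci,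
    RtoC, gauss; cbn [Re Im fst snd].
Ltac ceq := apply Ceq; cexpand; ring.

Lemma Cring_th : ring_theory C0 C1 Cadd Cmul Csub Copp (@eq C).
Proof. constructor; intros; ceq. Qed.
Add Ring Cring : Cring_th.

Lemma C1_neq_C0 : C1 <> C0.
Proof. intro E; apply (f_equal Re) in E; simpl in E; lra. Qed.

Lemma Cinv_l (z : C) : z <> C0 -> Cmul (Cinv z) z = C1.
Proof.
  destruct z as [a b]; intro Hz.
  assert (a * a + b * b <> 0).
  { intro E; apply Hz; apply Ceq; simpl; nra. }
  apply Ceq; unfold Cinv; simpl; field; auto.
Qed.

Lemma Cfield_th : field_theory C0 C1 Cadd Cmul Csub Copp Cdiv Cinv (@eq C).
Proof. constructor; [exact Cring_th | exact C1_neq_C0 | reflexivity | exact Cinv_l]. Qed.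
Add Field Cfield : Cfield_th.

Lemma Cmul_nz (z w : C) : z <> C0 -> w <> C0 -> Cmul z w <> C0.
Proof.
  intros Hz Hw E; apply Hz.
  transitivity (Cmul (Cmul z w) (Cinv w)); [field; auto | rewrite E; ring].
Qed.

Lemma Cpow_nz (z : C) (n : nat) : z <> C0 -> Cpow z n <> C0.
Proof. intro Hz; induction n; simpl; [exact C1_neq_C0 | apply Cmul_nz; auto]. Qed.

Lemma Cpow_add (z : C) (a b : nat) : Cpow z (a + b) = Cmul (Cpow z a) (Cpow z b).
Proof. induction a; simpl; [ring | rewrite IHa; ring]. Qed.

Lemma Cpow_mul (z w : C) (n : nat) : Cpow (Cmul z w) n = Cmul (Cpow z n) (Cpow w n).
Proof. induction n; simpl; [ring | rewrite IHn; ring]. Qed.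

Lemma Cpow_C1 (n : nat) : Cpow C1 n = C1.
Proof. induction n; simpl; [reflexivity | rewrite IHn; ring]. Qed.

Lemma Cconj_mul (z w : C) : Cconj (Cmul z w) = Cmul (Cconj z) (Cconj w).
Proof. ceq. Qed.

Lemma Cconj_nz (z : C) : z <> C0 -> Cconj z <> C0.
Proof.
  intros Hz E; apply Hz; apply (f_equal Cconj) in E.
  replace z with (Cconj (Cconj z)) by ceq; rewrite E; ceq.
Qed.

Lemma ee_add (z w : C) : ee (Cadd z w) = Cmul (ee z) (ee w).
Proof.
  assert (Hexp : forall u v, Cexp (Cadd u v) = Cmul (Cexp u) (Cexp v)).
  { intros [a b] [c d]; unfold Cexp; apply Ceq; cexpand;
      rewrite ?exp_plus, ?cos_plus, ?sin_plus; ring. }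
  unfold ee; rewrite <- Hexp; f_equal; ring.
Qed.

Lemma ee_0 : ee C0 = C1.
Proof.
  unfold ee, Cexp; cbn [Cmul Re Im C0].
  replace (0 * 0 - 2 * PI * 0) with 0 by ring; replace (0 * 0 + 2 * PI * 0) with 0 by ring.
  rewrite exp_0, cos_0, sin_0; ceq.
Qed.

Lemma ee_opp (z : C) : Cmul (ee (Copp z)) (ee z) = C1.
Proof. rewrite <- ee_add, <- ee_0; f_equal; ring. Qed.

Lemma sqrt_le_of_sq (x y : R) : 0 <= y -> x <= y * y -> sqrt x <= y.
Proof.
  intros Hy Hx; rewrite <- (sqrt_square y Hy).
  destruct (Rle_lt_dec 0 x).
  - apply sqrt_le_1; nra.
  - rewrite sqrt_neg_0 by lra; apply sqrt_pos.
Qed.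

Lemma Cabs_nonneg (z : C) : 0 <= Cabs z.
Proof. apply sqrt_pos. Qed.

Lemma Cabs_sq (z : C) : Cabs z * Cabs z = Re z * Re z + Im z * Im z.
Proof. apply sqrt_sqrt; nra. Qed.

Lemma Cabs_mul (z w : C) : Cabs (Cmul z w) = Cabs z * Cabs w.
Proof.
  destruct z as [a b], w as [c d]; unfold Cabs; simpl.
  rewrite <- sqrt_mult by nra; f_equal; ring.
Qed.

(* The triangle inequality, via Cauchy-Schwarz [ac + bd <= |z| |w|]. *)
Lemma Cabs_add (z w : C) : Cabs (Cadd z w) <= Cabs z + Cabs w.
Proof.
  pose proof (Cabs_sq z) as Ez; pose proof (Cabs_sq w) as Ew.
  pose proof (Cabs_nonneg z); pose proof (Cabs_nonneg w).
  destruct z as [a b], w as [c d]; simpl in *.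
  set (x := Cabs (mkC a b)) in *; set (y := Cabs (mkC c d)) in *; clearbody x y.
  assert (CS : a * c + b * d <= x * y).
  { assert ((a * c + b * d) * (a * c + b * d) <= (x * y) * (x * y)).
    { replace ((x * y) * (x * y)) with ((x * x) * (y * y)) by ring.
      rewrite Ez, Ew; pose proof (Rle_0_sqr (a * d - b * c)); unfold Rsqr in *; nra. }
    assert (0 <= x * y) by nra; nra. }
  unfold Cabs; apply sqrt_le_of_sq; simpl; nra.
Qed.

Lemma Cabs_C0 : Cabs C0 = 0.
Proof. unfold Cabs; simpl; replace (0 * 0 + 0 * 0) with 0 by ring; apply sqrt_0. Qed.

Lemma Cabs_eq0 (z : C) : Cabs z = 0 -> z = C0.
Proof.
  intro H; pose proof (Cabs_sq z) as E; rewrite H in E.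
  destruct z; apply Ceq; simpl in *; nra.
Qed.

Lemma Cabs_pos (z : C) : z <> C0 -> 0 < Cabs z.
Proof.
  intro Hz; destruct (Cabs_nonneg z); auto.
  exfalso; apply Hz, Cabs_eq0; auto.
Qed.

Lemma Cabs_sub_self (z : C) : Cabs (Csub z z) = 0.
Proof. replace (Csub z z) with C0 by ring; apply Cabs_C0. Qed.

Lemma Re_le_Cabs (z : C) : Rabs (Re z) <= Cabs z.
Proof. pose proof (Cabs_sq z); pose proof (Cabs_nonneg z); apply Rabs_le; split; nra. Qed.

Lemma Im_le_Cabs (z : C) : Rabs (Im z) <= Cabs z.
Proof. pose proof (Cabs_sq z); pose proof (Cabs_nonneg z); apply Rabs_le; split; nra. Qed.

Lemma Cabs_le_ReIm (z : C) : Cabs z <= Rabs (Re z) + Rabs (Im z).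
Proof.
  pose proof (Rabs_pos (Re z)); pose proof (Rabs_pos (Im z)).
  pose proof (Rsqr_abs (Re z)); pose proof (Rsqr_abs (Im z)); unfold Rsqr in *.
  unfold Cabs; apply sqrt_le_of_sq; nra.
Qed.

Definition continuous_op (op : C -> C -> C) : Prop :=
  forall a0 b0 e, 0 < e -> exists d, 0 < d /\ forall a b,
    Cabs (Csub a a0) < d -> Cabs (Csub b b0) < d -> Cabs (Csub (op a b) (op a0 b0)) < e.

Lemma Cadd_continuous : continuous_op Cadd.
Proof.
  intros f0 g0 e He; exists (e / 2); split; [lra|]; intros f g H1 H2.
  replace (Csub (Cadd f g) (Cadd f0 g0)) with (Cadd (Csub f f0) (Csub g g0)) by ring.
  pose proof (Cabs_add (Csub f f0) (Csub g g0)); lra.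
Qed.

Lemma Cmul_continuous : continuous_op Cmul.
Proof.
  intros f0 g0 e He.
  pose proof (Cabs_nonneg f0); pose proof (Cabs_nonneg g0).
  set (K := Cabs f0 + Cabs g0 + 1).
  set (d := Rmin 1 (e / (2 * K))).
  assert (Hd1 : d <= 1) by apply Rmin_l.
  assert (HdK : d * K <= e / 2).
  { assert (d <= e / (2 * K)) by apply Rmin_r.
    replace (e / 2) with (e / (2 * K) * K) by (field; unfold K; lra).
    apply Rmult_le_compat_r; [unfold K; lra | assumption]. }
  exists d; split; [apply Rmin_pos; [lra | apply Rdiv_lt_0_compat; unfold K; lra]|].
  intros f g H1 H2.
  replace (Csub (Cmul f g) (Cmul f0 g0)) with
    (Cadd (Cmul (Csub f f0) (Cadd (Csub g g0) g0)) (Cmul f0 (Csub g g0))) by ring.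
  pose proof (Cabs_add (Cmul (Csub f f0) (Cadd (Csub g g0) g0)) (Cmul f0 (Csub g g0))).
  pose proof (Cabs_add (Csub g g0) g0).
  pose proof (Cabs_nonneg (Csub f f0)); pose proof (Cabs_nonneg (Csub g g0)).
  rewrite !Cabs_mul in *.
  assert (Cabs (Csub f f0) * Cabs (Cadd (Csub g g0) g0) <= d * (1 + Cabs g0))
    by (apply Rmult_le_compat; try apply Cabs_nonneg; lra).
  assert (Cabs f0 * Cabs (Csub g g0) <= Cabs f0 * d) by (apply Rmult_le_compat_l; lra).
  unfold K in HdK; nra.
Qed.

(** * Holomorphy on [H x C^2] *)

Definition cont3 (f : C -> C -> C -> C) (t z1 z2 : C) : Prop :=
  forall eps, 0 < eps -> exists delta, 0 < delta /\
    forall t' z1' z2', Cabs (Csub t' t) < delta -> Cabs (Csub z1' z1) < delta ->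
      Cabs (Csub z2' z2) < delta -> Cabs (Csub (f t' z1' z2') (f t z1 z2)) < eps.

Lemma cont3_op (op : C -> C -> C) (f g : C -> C -> C -> C) (t z1 z2 : C) :
  continuous_op op -> cont3 f t z1 z2 -> cont3 g t z1 z2 ->
  cont3 (fun t z1 z2 => op (f t z1 z2) (g t z1 z2)) t z1 z2.
Proof.
  intros Hop Hf Hg e He.
  destruct (Hop (f t z1 z2) (g t z1 z2) e He) as [d [Hd Hd']].
  destruct (Hf d Hd) as [d1 [Hd1 H1]]; destruct (Hg d Hd) as [d2 [Hd2 H2]].
  exists (Rmin d1 d2); split; [apply Rmin_pos; auto|].
  pose proof (Rmin_l d1 d2); pose proof (Rmin_r d1 d2).
  intros t' z1' z2' A B D; apply Hd'; [apply H1 | apply H2]; lra.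
Qed.

Lemma cont3_const (c t z1 z2 : C) : cont3 (fun _ _ _ => c) t z1 z2.
Proof. intros e He; exists 1; split; [lra|]; intros; rewrite Cabs_sub_self; auto. Qed.

Lemma cont3_comp (g : C -> C -> C -> C) (L1 L2 : C -> C -> C) (K : R) (t z1 z2 : C) :
  0 < K ->
  (forall a b, Cabs (Csub (L1 a b) (L1 z1 z2)) <= K * (Cabs (Csub a z1) + Cabs (Csub b z2))) ->
  (forall a b, Cabs (Csub (L2 a b) (L2 z1 z2)) <= K * (Cabs (Csub a z1) + Cabs (Csub b z2))) ->
  cont3 g t (L1 z1 z2) (L2 z1 z2) ->
  cont3 (fun t z1 z2 => g t (L1 z1 z2) (L2 z1 z2)) t z1 z2.
Proof.
  intros HK H1 H2 Hg e He.
  destruct (Hg e He) as [d [Hd H]].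
  set (d' := d / (2 * K)).
  assert (Hd' : 0 < d') by (apply Rdiv_lt_0_compat; lra).
  assert (Hsmall : forall a b, Cabs (Csub a z1) < d' -> Cabs (Csub b z2) < d' ->
                     K * (Cabs (Csub a z1) + Cabs (Csub b z2)) < d).
  { intros a b Ha Hb.
    replace d with (K * (d' + d')) by (unfold d'; field; lra).
    apply Rmult_lt_compat_l; lra. }
  exists (Rmin d d'); split; [apply Rmin_pos; auto|].
  pose proof (Rmin_l d d'); pose proof (Rmin_r d d').
  intros t' a b A B D; apply H; [lra | |].
  - eapply Rle_lt_trans; [apply H1 | apply Hsmall; lra].
  - eapply Rle_lt_trans; [apply H2 | apply Hsmall; lra].
Qed.

Lemma Cdiff_ext (f g : C -> C) (z : C) :
  (forall u, f u = g u) -> Cdifferentiable f z -> Cdifferentiable g z.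
Proof. intros H Hf; replace g with f; auto; apply functional_extensionality; auto. Qed.

Lemma Cdiff_const (c z : C) : Cdifferentiable (fun _ => c) z.
Proof.
  exists C0; intros e He; exists 1; split; [lra|]; intros h _ _.
  replace (Csub (Cdiv (Csub c c) h) C0) with C0 by (unfold Cdiv; ring).
  rewrite Cabs_C0; auto.
Qed.

Lemma Cdiff_add (f g : C -> C) (z : C) :
  Cdifferentiable f z -> Cdifferentiable g z ->
  Cdifferentiable (fun u => Cadd (f u) (g u)) z.
Proof.
  intros [Lf Hf] [Lg Hg]; exists (Cadd Lf Lg); intros e He.
  destruct (Cadd_continuous Lf Lg e He) as [d [Hd H]].
  destruct (Hf d Hd) as [d1 [Hd1 H1]]; destruct (Hg d Hd) as [d2 [Hd2 H2]].
  exists (Rmin d1 d2); split; [apply Rmin_pos; auto|].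
  pose proof (Rmin_l d1 d2); pose proof (Rmin_r d1 d2); intros h A B.
  replace (Cdiv (Csub (Cadd (f (Cadd z h)) (g (Cadd z h))) (Cadd (f z) (g z))) h)
    with (Cadd (Cdiv (Csub (f (Cadd z h)) (f z)) h) (Cdiv (Csub (g (Cadd z h)) (g z)) h))
    by (unfold Cdiv; ring).
  apply H; [apply H1 | apply H2]; lra.
Qed.

Lemma Cdiff_continuous (f : C -> C) (z : C) : Cdifferentiable f z ->
  forall e, 0 < e -> exists d, 0 < d /\ forall h, Cabs h < d ->
    Cabs (Csub (f (Cadd z h)) (f z)) < e.
Proof.
  intros [L HL] e He.
  destruct (HL 1 Rlt_0_1) as [d [Hd H]].
  pose proof (Cabs_nonneg L).
  set (d' := e / (Cabs L + 1)).
  exists (Rmin d d'); split; [apply Rmin_pos; auto; apply Rdiv_lt_0_compat; lra|].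
  pose proof (Rmin_l d d'); pose proof (Rmin_r d d'); intros h Hh.
  destruct (Req_dec (Cabs h) 0) as [E|E].
  - apply Cabs_eq0 in E; subst h.
    replace (Cadd z C0) with z by ring; rewrite Cabs_sub_self; auto.
  - assert (Hh0 : 0 < Cabs h) by (pose proof (Cabs_nonneg h); lra).
    assert (hnz : h <> C0) by (intro; subst; rewrite Cabs_C0 in Hh0; lra).
    specialize (H h Hh0 ltac:(lra)).
    set (q := Csub (Cdiv (Csub (f (Cadd z h)) (f z)) h) L) in H.
    replace (Csub (f (Cadd z h)) (f z)) with (Cmul h (Cadd q L)) by (unfold q; field; auto).
    rewrite Cabs_mul; pose proof (Cabs_add q L).
    assert (Cabs h * Cabs (Cadd q L) <= Cabs h * (Cabs L + 1))
      by (apply Rmult_le_compat_l; lra).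
    assert (Cabs h * (Cabs L + 1) < d' * (Cabs L + 1)) by (apply Rmult_lt_compat_r; lra).
    replace (d' * (Cabs L + 1)) with e in * by (unfold d'; field; lra); lra.
Qed.

Lemma Cdiff_mul (f g : C -> C) (z : C) :
  Cdifferentiable f z -> Cdifferentiable g z ->
  Cdifferentiable (fun u => Cmul (f u) (g u)) z.
Proof.
  intros Df Dg; pose proof (Cdiff_continuous f z Df) as Cf.
  destruct Df as [Lf Hf], Dg as [Lg Hg].
  exists (Cadd (Cmul (f z) Lg) (Cmul (g z) Lf)); intros e He.
  destruct (Cadd_continuous (Cmul (f z) Lg) (Cmul (g z) Lf) e He) as [d [Hd H]].
  destruct (Cmul_continuous (f z) Lg d Hd) as [d1 [Hd1 H1]].
  destruct (Cmul_continuous (g z) Lf d Hd) as [d2 [Hd2 H2]].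
  destruct (Cf d1 Hd1) as [d3 [Hd3 H3]].
  destruct (Hg d1 Hd1) as [d4 [Hd4 H4]].
  destruct (Hf d2 Hd2) as [d5 [Hd5 H5]].
  exists (Rmin d3 (Rmin d4 d5)); split; [repeat apply Rmin_pos; auto|].
  pose proof (Rmin_l d3 (Rmin d4 d5)); pose proof (Rmin_r d3 (Rmin d4 d5)).
  pose proof (Rmin_l d4 d5); pose proof (Rmin_r d4 d5); intros h A B.
  assert (hnz : h <> C0) by (intro; subst; rewrite Cabs_C0 in A; lra).
  replace (Cdiv (Csub (Cmul (f (Cadd z h)) (g (Cadd z h))) (Cmul (f z) (g z))) h) with
    (Cadd (Cmul (f (Cadd z h)) (Cdiv (Csub (g (Cadd z h)) (g z)) h))
          (Cmul (g z) (Cdiv (Csub (f (Cadd z h)) (f z)) h))) by (unfold Cdiv; ring).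
  apply H; [apply H1 | apply H2].
  - apply H3; lra.
  - apply H4; lra.
  - rewrite Cabs_sub_self; lra.
  - apply H5; lra.
Qed.

Lemma Cdiff_affine (g : C -> C) (a b z : C) : a <> C0 ->
  Cdifferentiable g (Cadd (Cmul a z) b) ->
  Cdifferentiable (fun u => g (Cadd (Cmul a u) b)) z.
Proof.
  intros Ha [L HL]; exists (Cmul a L); intros e He.
  pose proof (Cabs_pos a Ha) as Pa.
  destruct (HL (e / Cabs a)) as [d [Hd H]]; [apply Rdiv_lt_0_compat; lra|].
  exists (d / Cabs a); split; [apply Rdiv_lt_0_compat; lra|]; intros h A B.
  assert (hnz : h <> C0) by (intro; subst; rewrite Cabs_C0 in A; lra).
  assert (Hah : 0 < Cabs (Cmul a h) < d).
  { rewrite Cabs_mul; split; [apply Rmult_lt_0_compat; lra|].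
    replace d with (Cabs a * (d / Cabs a)) by (field; lra).
    apply Rmult_lt_compat_l; lra. }
  specialize (H (Cmul a h) (proj1 Hah) (proj2 Hah)).
  replace (Cadd (Cadd (Cmul a z) b) (Cmul a h)) with (Cadd (Cmul a (Cadd z h)) b) in H by ring.
  set (D := Cdiv (Csub (g (Cadd (Cmul a (Cadd z h)) b)) (g (Cadd (Cmul a z) b))) (Cmul a h)) in H.
  replace (Csub (Cdiv (Csub (g (Cadd (Cmul a (Cadd z h)) b)) (g (Cadd (Cmul a z) b))) h) (Cmul a L))
    with (Cmul a (Csub D L)) by (unfold D; field; auto).
  rewrite Cabs_mul; replace e with (Cabs a * (e / Cabs a)) by (field; lra).
  apply Rmult_lt_compat_l; lra.
Qed.

Lemma holo3_op (op : C -> C -> C) (f g : C -> C -> C -> C) :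
  continuous_op op ->
  (forall F G z, Cdifferentiable F z -> Cdifferentiable G z ->
     Cdifferentiable (fun u => op (F u) (G u)) z) ->
  holo3 f -> holo3 g -> holo3 (fun t z1 z2 => op (f t z1 z2) (g t z1 z2)).
Proof.
  intros Hop Hd Hf Hg t z1 z2 Ht.
  destruct (Hf t z1 z2 Ht) as [Cf [Df0 [Df1 Df2]]].
  destruct (Hg t z1 z2 Ht) as [Cg [Dg0 [Dg1 Dg2]]].
  split; [exact (cont3_op op f g t z1 z2 Hop Cf Cg)|].
  split; [|split]; apply Hd; assumption.
Qed.

Lemma holo3_add (f g : C -> C -> C -> C) :
  holo3 f -> holo3 g -> holo3 (fun t z1 z2 => Cadd (f t z1 z2) (g t z1 z2)).
Proof. apply holo3_op; [exact Cadd_continuous | exact Cdiff_add]. Qed.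

Lemma holo3_mul (f g : C -> C -> C -> C) :
  holo3 f -> holo3 g -> holo3 (fun t z1 z2 => Cmul (f t z1 z2) (g t z1 z2)).
Proof. apply holo3_op; [exact Cmul_continuous | exact Cdiff_mul]. Qed.

Lemma holo3_const (c : C) : holo3 (fun _ _ _ => c).
Proof.
  intros t z1 z2 _; split; [exact (cont3_const c t z1 z2)|].
  split; [|split]; apply Cdiff_const.
Qed.

Lemma holo3_Csum {A : Type} (F : A -> C -> C -> C -> C) (l : list A) :
  (forall e, In e l -> holo3 (F e)) ->
  holo3 (fun t z1 z2 => Csum (fun e => F e t z1 z2) l).
Proof.
  induction l as [|e l IH]; intro H; simpl; [apply holo3_const|].
  apply (holo3_add (F e) (fun t z1 z2 => Csum (fun e => F e t z1 z2) l)).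
  - apply H; simpl; auto.
  - apply IH; intros; apply H; simpl; auto.
Qed.

Lemma linear_form_lipschitz (u v a b z1 z2 : C) (K : R) : Cabs u + Cabs v <= K ->
  Cabs (Csub (Cadd (Cmul u a) (Cmul v b)) (Cadd (Cmul u z1) (Cmul v z2)))
  <= K * (Cabs (Csub a z1) + Cabs (Csub b z2)).
Proof.
  intro HK.
  pose proof (Cabs_nonneg u); pose proof (Cabs_nonneg v).
  pose proof (Cabs_nonneg (Csub a z1)); pose proof (Cabs_nonneg (Csub b z2)).
  replace (Csub (Cadd (Cmul u a) (Cmul v b)) (Cadd (Cmul u z1) (Cmul v z2)))
    with (Cadd (Cmul u (Csub a z1)) (Cmul v (Csub b z2))) by ring.
  eapply Rle_trans; [apply Cabs_add|]; rewrite !Cabs_mul; nra.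
Qed.

Lemma holo3_scale (f : C -> C -> C -> C) (u v : C) : u <> C0 -> v <> C0 ->
  holo3 f -> holo3 (fun t z1 z2 => f t (Cmul u z1) (Cmul v z2)).
Proof.
  intros Hu Hv Hf t z1 z2 Ht.
  destruct (Hf t (Cmul u z1) (Cmul v z2) Ht) as [Cf [D0 [D1 D2]]].
  pose proof (Cabs_nonneg u); pose proof (Cabs_nonneg v).
  split; [|split; [exact D0 | split]].
  - apply (cont3_comp f (fun a _ => Cmul u a) (fun _ b => Cmul v b) (Cabs u + Cabs v + 1));
      [lra | intros a b | intros a b | exact Cf]; cbv beta.
    + replace (Cmul u a) with (Cadd (Cmul u a) (Cmul C0 b)) by ring.
      replace (Cmul u z1) with (Cadd (Cmul u z1) (Cmul C0 z2)) by ring.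
      apply linear_form_lipschitz; rewrite Cabs_C0; lra.
    + replace (Cmul v b) with (Cadd (Cmul C0 a) (Cmul v b)) by ring.
      replace (Cmul v z2) with (Cadd (Cmul C0 z1) (Cmul v z2)) by ring.
      apply linear_form_lipschitz; rewrite Cabs_C0; lra.
  - apply (Cdiff_ext (fun w => f t (Cadd (Cmul u w) C0) (Cmul v z2))); [intro; f_equal; ring|].
    apply (Cdiff_affine (fun w => f t w (Cmul v z2))); auto.
    replace (Cadd (Cmul u z1) C0) with (Cmul u z1) by ring; exact D1.
  - apply (Cdiff_ext (fun w => f t (Cmul u z1) (Cadd (Cmul v w) C0))); [intro; f_equal; ring|].
    apply (Cdiff_affine (fun w => f t (Cmul u z1) w)); auto.
    replace (Cadd (Cmul v z2) C0) with (Cmul v z2) by ring; exact D2.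
Qed.

Lemma holo3_linear_form (p : C -> C -> C) (u v : C) : u <> C0 -> v <> C0 ->
  holo2 p -> holo3 (fun t z1 z2 => p t (Cadd (Cmul u z1) (Cmul v z2))).
Proof.
  intros Hu Hv Hp t z1 z2 Ht.
  destruct (Hp t (Cadd (Cmul u z1) (Cmul v z2)) Ht) as [Cp [D0 D1]].
  pose proof (Cabs_nonneg u); pose proof (Cabs_nonneg v).
  split; [|split; [exact D0 | split]].
  - apply (cont3_comp (fun t w _ => p t w) (fun a b => Cadd (Cmul u a) (Cmul v b))
             (fun _ _ => C0) (Cabs u + Cabs v + 1));
      [lra | intros a b | intros a b | ]; cbv beta.
    + apply linear_form_lipschitz; lra.
    + rewrite Cabs_sub_self; pose proof (Cabs_nonneg (Csub a z1));
        pose proof (Cabs_nonneg (Csub b z2)); nra.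
    + intros e He; destruct (Cp e He) as [d [Hd Hd']].
      exists d; split; auto; intros t' w' _ A B _; apply Hd'; auto.
  - apply (Cdiff_affine (fun w => p t w)); auto.
  - apply (Cdiff_ext (fun w => p t (Cadd (Cmul v w) (Cmul u z1)))); [intro; f_equal; ring|].
    apply (Cdiff_affine (fun w => p t w)); auto.
    replace (Cadd (Cmul v z2) (Cmul u z1)) with (Cadd (Cmul u z1) (Cmul v z2)) by ring; exact D1.
Qed.

Lemma holo3_slashI (k : nat) (eta : C) (f : C -> C -> C -> C) :
  eta <> C0 -> holo3 f -> holo3 (slashI k eta f).
Proof.
  intros Heta Hf; unfold slashI.
  apply (holo3_mul (fun _ _ _ => _) (fun t z1 z2 => f t (Cmul eta z1) (Cmul (Cconj eta) z2))).
  - apply holo3_const.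
  - apply holo3_scale; auto; apply Cconj_nz; auto.
Qed.

Lemma Csum_app {A : Type} (f : A -> C) (l1 l2 : list A) :
  Csum f (l1 ++ l2) = Cadd (Csum f l1) (Csum f l2).
Proof. induction l1; simpl; [ring | rewrite IHl1; ring]. Qed.

Lemma Rsum_app {A : Type} (f : A -> R) (l1 l2 : list A) :
  Rsum f (l1 ++ l2) = Rsum f l1 + Rsum f l2.
Proof. induction l1; simpl; [ring | rewrite IHl1; ring]. Qed.

Lemma Csum_ext {A : Type} (f g : A -> C) (l : list A) :
  (forall x, In x l -> f x = g x) -> Csum f l = Csum g l.
Proof. induction l; simpl; intro H; auto; rewrite H, IHl; auto. Qed.

Lemma Rsum_ext {A : Type} (f g : A -> R) (l : list A) :
  (forall x, In x l -> f x = g x) -> Rsum f l = Rsum g l.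
Proof. induction l; simpl; intro H; auto; rewrite H, IHl; auto. Qed.

Lemma Rsum_le {A : Type} (f g : A -> R) (l : list A) :
  (forall x, In x l -> f x <= g x) -> Rsum f l <= Rsum g l.
Proof.
  induction l; simpl; intro H; [lra|].
  pose proof (H a (or_introl eq_refl)); pose proof (IHl (fun x Hx => H x (or_intror Hx))); lra.
Qed.

Lemma Rsum_nonneg {A : Type} (f : A -> R) (l : list A) :
  (forall x, In x l -> 0 <= f x) -> 0 <= Rsum f l.
Proof.
  intro H; replace 0 with (Rsum (fun _ : A => 0) l) by (clear; induction l; simpl; lra).
  apply Rsum_le; auto.
Qed.

Lemma Rsum_ge_term {A : Type} (f : A -> R) (l : list A) (x : A) :
  (forall y, In y l -> 0 <= f y) -> In x l -> f x <= Rsum f l.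
Proof.
  induction l as [|y l IH]; simpl; intros H Hx; [contradiction|].
  pose proof (H y (or_introl eq_refl)).
  pose proof (Rsum_nonneg f l (fun z Hz => H z (or_intror Hz))).
  destruct Hx as [<- | Hx]; [lra|].
  pose proof (IH (fun z Hz => H z (or_intror Hz)) Hx); lra.
Qed.

Lemma Csum_zero {A : Type} (l : list A) : Csum (fun _ => C0) l = C0.
Proof. induction l; simpl; auto; rewrite IHl; ring. Qed.

Lemma Rsum_zero {A : Type} (l : list A) : Rsum (fun _ => 0) l = 0.
Proof. induction l; simpl; auto; rewrite IHl; ring. Qed.

Lemma Csum_lin {A : Type} (a : C) (f g : A -> C) (l : list A) :
  Csum (fun x => Cadd (Cmul a (f x)) (g x)) l = Cadd (Cmul a (Csum f l)) (Csum g l).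
Proof. induction l; simpl; [ring | rewrite IHl; ring]. Qed.

Lemma Rsum_lin {A : Type} (a : R) (f g : A -> R) (l : list A) :
  Rsum (fun x => a * f x + g x) l = a * Rsum f l + Rsum g l.
Proof. induction l; simpl; [ring | rewrite IHl; ring]. Qed.

Lemma Csum_add {A : Type} (f g : A -> C) (l : list A) :
  Csum (fun x => Cadd (f x) (g x)) l = Cadd (Csum f l) (Csum g l).
Proof. induction l; simpl; [ring | rewrite IHl; ring]. Qed.

Lemma Rsum_add {A : Type} (f g : A -> R) (l : list A) :
  Rsum (fun x => f x + g x) l = Rsum f l + Rsum g l.
Proof. induction l; simpl; [ring | rewrite IHl; ring]. Qed.

Lemma Csum_scal {A : Type} (a : C) (f : A -> C) (l : list A) :
  Csum (fun x => Cmul a (f x)) l = Cmul a (Csum f l).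
Proof. induction l; simpl; [ring | rewrite IHl; ring]. Qed.

Lemma Csum_scal_r {A : Type} (a : C) (f : A -> C) (l : list A) :
  Csum (fun x => Cmul (f x) a) l = Cmul (Csum f l) a.
Proof. induction l; simpl; [ring | rewrite IHl; ring]. Qed.

Lemma Rsum_scal {A : Type} (a : R) (f : A -> R) (l : list A) :
  Rsum (fun x => a * f x) l = a * Rsum f l.
Proof. induction l; simpl; [ring | rewrite IHl; ring]. Qed.

Lemma Cabs_Csum {A : Type} (f : A -> C) (l : list A) :
  Cabs (Csum f l) <= Rsum (fun x => Cabs (f x)) l.
Proof.
  induction l; simpl; [rewrite Cabs_C0; lra|].
  eapply Rle_trans; [apply Cabs_add | lra].
Qed.

Lemma Csum_swap {A B : Type} (f : A -> B -> C) (l1 : list A) (l2 : list B) :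
  Csum (fun x => Csum (f x) l2) l1 = Csum (fun y => Csum (fun x => f x y) l1) l2.
Proof. induction l1; simpl; [rewrite Csum_zero; auto | rewrite IHl1, Csum_add; auto]. Qed.

Lemma Rsum_swap {A B : Type} (f : A -> B -> R) (l1 : list A) (l2 : list B) :
  Rsum (fun x => Rsum (f x) l2) l1 = Rsum (fun y => Rsum (fun x => f x y) l1) l2.
Proof. induction l1; simpl; [rewrite Rsum_zero; auto | rewrite IHl1, Rsum_add; auto]. Qed.

Lemma Csum_perm {A : Type} (f : A -> C) (l l' : list A) :
  Permutation l l' -> Csum f l = Csum f l'.
Proof. induction 1; simpl; auto; [rewrite IHPermutation | ring | congruence]; auto. Qed.

Lemma Rsum_perm {A : Type} (f : A -> R) (l l' : list A) :
  Permutation l l' -> Rsum f l = Rsum f l'.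
Proof. induction 1; simpl; auto; [rewrite IHPermutation | ring | congruence]; auto. Qed.

Lemma Csum_map {A B : Type} (f : B -> C) (g : A -> B) (l : list A) :
  Csum f (map g l) = Csum (fun x => f (g x)) l.
Proof. induction l; simpl; auto; rewrite IHl; auto. Qed.

Lemma Rsum_map {A B : Type} (f : B -> R) (g : A -> B) (l : list A) :
  Rsum f (map g l) = Rsum (fun x => f (g x)) l.
Proof. induction l; simpl; auto; rewrite IHl; auto. Qed.

Lemma Csum_filter {A : Type} (p : A -> bool) (f : A -> C) (l : list A) :
  Csum (fun x => if p x then f x else C0) l = Csum f (filter p l).
Proof. induction l; simpl; auto; destruct (p a); simpl; rewrite IHl; auto; ring. Qed.

Lemma Rsum_filter {A : Type} (p : A -> bool) (f : A -> R) (l : list A) :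
  Rsum (fun x => if p x then f x else 0) l = Rsum f (filter p l).
Proof. induction l; simpl; auto; destruct (p a); simpl; rewrite IHl; auto; ring. Qed.

Lemma Csum_prod {A B : Type} (g : A -> C) (h : B -> C) (l1 : list A) (l2 : list B) :
  Csum (fun xy => Cmul (g (fst xy)) (h (snd xy))) (list_prod l1 l2)
  = Cmul (Csum g l1) (Csum h l2).
Proof.
  induction l1; simpl; [ring|].
  rewrite Csum_app, IHl1, Csum_map; simpl; rewrite Csum_scal; ring.
Qed.

Lemma Rsum_prod {A B : Type} (g : A -> R) (h : B -> R) (l1 : list A) (l2 : list B) :
  Rsum (fun xy => g (fst xy) * h (snd xy)) (list_prod l1 l2) = Rsum g l1 * Rsum h l2.
Proof.
  induction l1; simpl; [ring|].
  rewrite Rsum_app, IHl1, Rsum_map; simpl; rewrite Rsum_scal; ring.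
Qed.

Lemma Csum_seqS (f : nat -> C) (N : nat) :
  Csum f (seq 0 (S N)) = Cadd (Csum f (seq 0 N)) (f N).
Proof. rewrite seq_S, Csum_app; simpl; ring. Qed.

Lemma Rsum_seqS (f : nat -> R) (N : nat) :
  Rsum f (seq 0 (S N)) = Rsum f (seq 0 N) + f N.
Proof. rewrite seq_S, Rsum_app; simpl; ring. Qed.

(** * Convergent series and the Cauchy product *)

Definition Ccv_abs (u : nat -> C) (l : C) : Prop :=
  forall e, 0 < e -> exists N, forall n, (n >= N)%nat -> Cabs (Csub (u n) l) < e.

Lemma Ccv_iff (u : nat -> C) (l : C) : Ccv u l <-> Ccv_abs u l.
Proof.
  split.
  - intros [H1 H2] e He.
    destruct (H1 (e / 2)) as [N1 HN1]; [lra|]; destruct (H2 (e / 2)) as [N2 HN2]; [lra|].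
    exists (max N1 N2); intros n Hn; eapply Rle_lt_trans; [apply Cabs_le_ReIm|].
    specialize (HN1 n ltac:(lia)); specialize (HN2 n ltac:(lia)); unfold R_dist in *.
    simpl; unfold Rminus in *; lra.
  - intro H; split; intros e He; destruct (H e He) as [N HN]; exists N; intros n Hn;
      specialize (HN n Hn); unfold R_dist.
    + apply (Rle_lt_trans _ _ _ (Re_le_Cabs (Csub (u n) l)) HN).
    + apply (Rle_lt_trans _ _ _ (Im_le_Cabs (Csub (u n) l)) HN).
Qed.

Lemma Ccv_lin (a : C) (u v : nat -> C) (lu lv : C) : Ccv u lu -> Ccv v lv ->
  Ccv (fun n => Cadd (Cmul a (u n)) (v n)) (Cadd (Cmul a lu) lv).
Proof.
  rewrite !Ccv_iff; intros Hu Hv e He.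
  destruct (Cadd_continuous (Cmul a lu) lv e He) as [d [Hd H]].
  destruct (Cmul_continuous a lu d Hd) as [d1 [Hd1 H1]].
  destruct (Hu d1 Hd1) as [N1 HN1]; destruct (Hv d Hd) as [N2 HN2].
  exists (max N1 N2); intros n Hn; apply H; [apply H1|].
  - rewrite Cabs_sub_self; auto.
  - apply HN1; lia.
  - apply HN2; lia.
Qed.

Lemma Ccv_ext (u v : nat -> C) (l : C) : (forall n, u n = v n) -> Ccv u l -> Ccv v l.
Proof. intros H Hu; replace v with u; auto; apply functional_extensionality; auto. Qed.

Lemma Ccv_scal (a : C) (u : nat -> C) (l : C) :
  Ccv u l -> Ccv (fun n => Cmul a (u n)) (Cmul a l).
Proof.
  intro H.
  assert (Hzero : Ccv (fun _ => C0) C0)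
    by (apply Ccv_iff; intros e He; exists O; intros; rewrite Cabs_sub_self; auto).
  replace (Cmul a l) with (Cadd (Cmul a l) C0) by ring.
  eapply Ccv_ext; [|exact (Ccv_lin a _ _ _ _ H Hzero)]; intro; cbv beta; ring.
Qed.

Definition ps (a : nat -> C) (N : nat) : C := Csum a (seq 0 (S N)).
Definition rps (a : nat -> R) (N : nat) : R := Rsum a (seq 0 (S N)).

Lemma ps_convolution (a b : nat -> C) (N : nat) :
  ps (fun n => Csum (fun j => Cmul (a j) (b (n - j)%nat)) (seq 0 (S n))) N
  = Csum (fun j => Cmul (a j) (ps b (N - j))) (seq 0 (S N)).
Proof.
  unfold ps; induction N; [simpl; ring|].
  rewrite Csum_seqS, IHN, (Csum_seqS (fun j => Cmul (a j) (Csum b (seq 0 (S (S N - j)))))).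
  rewrite (Csum_seqS (fun j => Cmul (a j) (b (S N - j)%nat)) (S N)).
  rewrite (Csum_ext (fun j => Cmul (a j) (Csum b (seq 0 (S (S N - j)))))
     (fun j => Cadd (Cmul (a j) (Csum b (seq 0 (S (N - j))))) (Cmul (a j) (b (S N - j)%nat)))).
  - rewrite Csum_add; replace (S N - S N)%nat with O by lia; simpl; ring.
  - intros j Hj; apply in_seq in Hj; replace (S N - j)%nat with (S (N - j)) by lia.
    rewrite Csum_seqS; ring.
Qed.

Lemma rps_convolution (a b : nat -> R) (N : nat) :
  rps (fun n => Rsum (fun j => a j * b (n - j)%nat) (seq 0 (S n))) N
  = Rsum (fun j => a j * rps b (N - j)) (seq 0 (S N)).
Proof.
  unfold rps; induction N; [simpl; ring|].
  rewrite Rsum_seqS, IHN, (Rsum_seqS (fun j => a j * Rsum b (seq 0 (S (S N - j))))).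
  rewrite (Rsum_seqS (fun j => a j * b (S N - j)%nat) (S N)).
  rewrite (Rsum_ext (fun j => a j * Rsum b (seq 0 (S (S N - j))))
     (fun j => a j * Rsum b (seq 0 (S (N - j))) + a j * b (S N - j)%nat)).
  - rewrite Rsum_add; replace (S N - S N)%nat with O by lia; simpl; ring.
  - intros j Hj; apply in_seq in Hj; replace (S N - j)%nat with (S (N - j)) by lia.
    rewrite Rsum_seqS; ring.
Qed.

Lemma rps_tail (a : nat -> R) (L N : nat) : (L <= N)%nat ->
  Rsum (fun j => if (L <? j)%nat then a j else 0) (seq 0 (S N)) = rps a N - rps a L.
Proof.
  unfold rps; induction 1.
  - rewrite (Rsum_ext _ (fun _ => 0)), Rsum_zero; [ring|].
    intros j Hj; apply in_seq in Hj; destruct (Nat.ltb_spec L j); [lia | auto].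
  - rewrite Rsum_seqS, IHle, (Rsum_seqS a (S m)).
    destruct (Nat.ltb_spec L (S m)); [ring | lia].
Qed.

Lemma nonneg_series_tail (a : nat -> R) (M : R) :
  (forall j, 0 <= a j) -> (forall N, rps a N <= M) ->
  forall e, 0 < e -> exists L, forall N, (N >= L)%nat -> rps a N - rps a L <= e.
Proof.
  intros Ha HM e He.
  assert (Hinc : Un_growing (rps a)).
  { intro n; unfold rps; rewrite (Rsum_seqS _ (S n)); pose proof (Ha (S n)); lra. }
  destruct (growing_cv (rps a) Hinc) as [l Hl]; [exists M; intros x [n ->]; apply HM|].
  destruct (Hl (e / 2)) as [L HL]; [lra|].
  exists L; intros N HN.
  pose proof (HL N ltac:(lia)); pose proof (HL L ltac:(lia)); unfold R_dist in *.
  apply Rabs_def2 in H; apply Rabs_def2 in H0; lra.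
Qed.

Lemma Ccv_bounded (u : nat -> C) (l : C) : Ccv_abs u l ->
  exists D, 0 <= D /\ forall n, Cabs (Csub (u n) l) <= D.
Proof.
  intro H; destruct (H 1 Rlt_0_1) as [K HK].
  set (Sk := Rsum (fun n => Cabs (Csub (u n) l)) (seq 0 (S K))).
  assert (HS : forall n, (n <= K)%nat -> Cabs (Csub (u n) l) <= Sk).
  { intros n Hn; apply (Rsum_ge_term (fun n => Cabs (Csub (u n) l)));
      [intros; apply Cabs_nonneg | apply in_seq; lia]. }
  assert (HSk : 0 <= Sk) by (apply Rsum_nonneg; intros; apply Cabs_nonneg).
  exists (Sk + 1); split; [lra|].
  intro n; destruct (le_lt_dec n K) as [Hn|Hn]; [pose proof (HS n Hn); lra|].
  pose proof (HK n ltac:(lia)); lra.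
Qed.

Lemma mertens_estimate (a b : nat -> C) (B : C) (D e' : R) (K L N : nat) :
  (forall n, Cabs (Csub (ps b n) B) <= D) ->
  (forall n, (n >= K)%nat -> Cabs (Csub (ps b n) B) < e') ->
  (L + K <= N)%nat ->
  Cabs (Csum (fun j => Cmul (a j) (Csub (ps b (N - j)) B)) (seq 0 (S N)))
  <= e' * rps (fun j => Cabs (a j)) N
     + D * (rps (fun j => Cabs (a j)) N - rps (fun j => Cabs (a j)) L).
Proof.
  intros HD HK HN.
  eapply Rle_trans; [apply Cabs_Csum|].
  rewrite <- (rps_tail _ L N) by lia; unfold rps; rewrite <- !Rsum_scal, <- Rsum_add.
  apply Rsum_le; intros j Hj; apply in_seq in Hj; rewrite Cabs_mul.
  pose proof (Cabs_nonneg (a j)); pose proof (Cabs_nonneg (Csub (ps b (N - j)) B)).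
  destruct (Nat.ltb_spec L j).
  - pose proof (HD (N - j)%nat); assert (0 <= e' * Cabs (a j)).
    { apply Rmult_le_pos; auto; specialize (HK (N - j + K)%nat ltac:(lia));
        pose proof (Cabs_nonneg (Csub (ps b (N - j + K)) B)); lra. }
    nra.
  - assert (Cabs (Csub (ps b (N - j)) B) < e') by (apply HK; lia); nra.
Qed.

Lemma cauchy_product (a b : nat -> C) (A B : C) (Ma : R) :
  Ccv (ps a) A -> Ccv (ps b) B -> (forall N, rps (fun j => Cabs (a j)) N <= Ma) ->
  Ccv (ps (fun n => Csum (fun j => Cmul (a j) (b (n - j)%nat)) (seq 0 (S n)))) (Cmul A B).
Proof.
  rewrite !Ccv_iff; intros HA HB HM e He.
  set (T := rps (fun j => Cabs (a j))).
  destruct (Ccv_bounded _ _ HB) as [D [HD0 HD]].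
  assert (HMa : 0 <= Ma).
  { specialize (HM O); unfold rps in HM; simpl in HM; pose proof (Cabs_nonneg (a O)); lra. }
  set (e' := e / (2 * (Ma + D + 2))).
  assert (He' : 0 < e') by (apply Rdiv_lt_0_compat; lra).
  assert (Hsmall : e' * (Ma + D) <= e / 2).
  { unfold e'; apply (Rmult_le_reg_r (2 * (Ma + D + 2))); [lra|].
    field_simplify; [nra | lra]. }
  destruct (nonneg_series_tail _ Ma (fun j => Cabs_nonneg (a j)) HM e' He') as [L HL].
  destruct (HB e' He') as [K HK].
  destruct (Cmul_continuous A B (e / 2)) as [d [Hd Hmul]]; [lra|].
  destruct (HA d Hd) as [N0 HN0].
  exists (max N0 (L + K)); intros N HN; rewrite ps_convolution.
  replace (Csub (Csum (fun j => Cmul (a j) (ps b (N - j))) (seq 0 (S N))) (Cmul A B)) with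
    (Cadd (Csum (fun j => Cmul (a j) (Csub (ps b (N - j)) B)) (seq 0 (S N)))
          (Csub (Cmul (ps a N) B) (Cmul A B))).
  2:{ unfold ps at 2.
      rewrite (Csum_ext _ (fun j => Cadd (Cmul (a j) (ps b (N - j))) (Cmul (Copp B) (a j))))
        by (intros; ring).
      rewrite Csum_add, Csum_scal; ring. }
  eapply Rle_lt_trans; [apply Cabs_add|].
  pose proof (mertens_estimate a b B D e' K L N HD HK ltac:(lia)) as Herr; fold T in Herr.
  assert (Cabs (Csub (Cmul (ps a N) B) (Cmul A B)) < e / 2).
  { apply Hmul; [apply HN0; lia | rewrite Cabs_sub_self; auto]. }
  assert (e' * T N <= e' * Ma) by (apply Rmult_le_compat_l; [lra | apply HM]).
  assert (D * (T N - T L) <= D * e') by (apply Rmult_le_compat_l; [lra | apply HL; lia]).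
  lra.
Qed.

Lemma In_zrange (B : nat) (x : Z) :
  In x (zrange B) <-> (- Z.of_nat B <= x <= Z.of_nat B)%Z.
Proof.
  unfold zrange; rewrite in_map_iff; split.
  - intros [k [<- Hk]]; apply in_seq in Hk; lia.
  - intro H; exists (Z.to_nat (x + Z.of_nat B)); split; [lia | apply in_seq; lia].
Qed.

Lemma NoDup_zrange (B : nat) : NoDup (zrange B).
Proof.
  unfold zrange; apply FinFun.Injective_map_NoDup; [intros a b E; lia | apply seq_NoDup].
Qed.

Lemma NoDup_list_prod {A B : Type} (l1 : list A) (l2 : list B) :
  NoDup l1 -> NoDup l2 -> NoDup (list_prod l1 l2).
Proof.
  intros H1 H2; induction H1 as [|x l1 Hx H1 IH]; simpl; [constructor|].
  apply NoDup_app; auto.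
  - apply FinFun.Injective_map_NoDup; auto; intros a b E; inversion E; auto.
  - intros [a b] Ha Hb; apply in_map_iff in Ha; destruct Ha as [y [E _]].
    inversion E; subst; apply in_prod_iff in Hb; tauto.
Qed.

Lemma zrange_covers (m n : nat) (x : Z) : (x * x <= 4 * Z.of_nat n * Z.of_nat m)%Z ->
  In x (zrange (2 * n * m + 1)).
Proof.
  intro H; apply In_zrange.
  replace (Z.of_nat (2 * n * m + 1)) with (2 * (Z.of_nat n * Z.of_nat m) + 1)%Z by lia.
  nia.
Qed.

Lemma In_cl_range (m n : nat) (x : Z) :
  In x (cl_range m n) <-> (x * x <= 4 * Z.of_nat n * Z.of_nat m)%Z.
Proof.
  unfold cl_range; rewrite filter_In, Z.leb_le; split; [tauto|].
  intro H; split; auto; apply zrange_covers; auto.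
Qed.

Lemma In_K_range (m n : nat) (x y : Z) :
  In (x, y) (K_range m n) <-> (x * x + y * y <= 4 * Z.of_nat n * Z.of_nat m)%Z.
Proof.
  unfold K_range; rewrite filter_In, in_prod_iff, Z.leb_le; cbn [fst snd]; split; [tauto|].
  intro H; split; auto; split; apply zrange_covers; nia.
Qed.

Lemma NoDup_cl_range (m n : nat) : NoDup (cl_range m n).
Proof. apply NoDup_filter, NoDup_zrange. Qed.

Lemma NoDup_K_range (m n : nat) : NoDup (K_range m n).
Proof. apply NoDup_filter, NoDup_list_prod; apply NoDup_zrange. Qed.

(* The norm [x^2 + y^2] of the index [r = (x + iy)/2], scaled by 4. *)
Definition normZ (xy : Z * Z) : Z := (fst xy * fst xy + snd xy * snd xy)%Z.

Definition split_index (m n j : nat) (xy : Z * Z) : bool :=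
  (Z.leb (fst xy * fst xy) (4 * Z.of_nat j * Z.of_nat m) &&
   Z.leb (snd xy * snd xy) (4 * Z.of_nat (n - j) * Z.of_nat m))%bool.

Lemma K_range_split (m n j : nat) : (j <= n)%nat ->
  Permutation (filter (split_index m n j) (K_range m n))
              (list_prod (cl_range m j) (cl_range m (n - j))).
Proof.
  intro Hj; apply NoDup_Permutation.
  - apply NoDup_filter, NoDup_K_range.
  - apply NoDup_list_prod; apply NoDup_cl_range.
  - intros [x y]; rewrite filter_In, in_prod_iff, In_K_range, !In_cl_range.
    unfold split_index; cbn [fst snd]; rewrite Bool.andb_true_iff, !Z.leb_le.
    rewrite Nat2Z.inj_sub by lia; split; [tauto|].
    intros [A B]; split; auto; nia.
Qed.

(** * Fourier expansions over [O_K] with prescribed vanishing coefficients *)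

(* [f] has an expansion over [O_K] whose coefficients [c(n, r)] vanish whenever
   [V n (4 N(r))] holds; [V] never holding gives plain forms, [4 N(r) = 4nm]
   gives cusp forms. *)
Definition FourierVanishing (m : nat) (V : nat -> Z -> Prop) (f : C -> C -> C -> C) : Prop :=
  exists c, HasFourier_K m f c /\ forall n xy, V n (normZ xy) -> c n xy = C0.

Lemma K_term_lin (a : C) (c c' : nat -> Z * Z -> C) (t z1 z2 : C) (n : nat) (xy : Z * Z) :
  K_term (fun n xy => Cadd (Cmul a (c n xy)) (c' n xy)) t z1 z2 n xy
  = Cadd (Cmul a (K_term c t z1 z2 n xy)) (K_term c' t z1 z2 n xy).
Proof. unfold K_term; ring. Qed.

Lemma FourierVanishing_lin (m : nat) (V : nat -> Z -> Prop) (a : C) (f g : C -> C -> C -> C) :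
  FourierVanishing m V f -> FourierVanishing m V g -> FourierVanishing m V (lin3 a f g).
Proof.
  intros [cf [Hf Vf]] [cg [Hg Vg]].
  exists (fun n xy => Cadd (Cmul a (cf n xy)) (cg n xy)); split.
  - intros t z1 z2 Ht.
    destruct (Hf t z1 z2 Ht) as [Lf [Mf Bf]], (Hg t z1 z2 Ht) as [Lg [Mg Bg]]; split.
    + eapply Ccv_ext; [|exact (Ccv_lin a _ _ _ _ Lf Lg)]; intro N; cbv beta.
      rewrite <- Csum_lin; apply Csum_ext; intros n _.
      rewrite <- Csum_lin; apply Csum_ext; intros xy _; symmetry; apply K_term_lin.
    + exists (Cabs a * Mf + Mg); intro N.
      specialize (Bf N); specialize (Bg N); pose proof (Cabs_nonneg a).
      eapply Rle_trans; [|apply Rplus_le_compat; [apply Rmult_le_compat_l|]; eauto].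
      rewrite <- Rsum_lin; apply Rsum_le; intros n _.
      rewrite <- Rsum_lin; apply Rsum_le; intros xy _.
      rewrite K_term_lin, <- Cabs_mul; apply Cabs_add.
  - intros n xy E; rewrite Vf, Vg by auto; ring.
Qed.

Lemma FourierVanishing_zero (m : nat) (V : nat -> Z -> Prop) :
  FourierVanishing m V (fun _ _ _ => C0).
Proof.
  exists (fun _ _ => C0); split; [|auto].
  intros t z1 z2 Ht.
  assert (Hterm : forall n xy, K_term (fun _ _ => C0) t z1 z2 n xy = C0)
    by (intros; unfold K_term; ring).
  split.
  - rewrite Ccv_iff; intros e He; exists O; intros N _.
    rewrite (Csum_ext _ (fun _ => C0)), Csum_zero, Cabs_sub_self; auto.
    intros n _; rewrite (Csum_ext _ (fun _ => C0)), Csum_zero; auto.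
  - exists 0; intro N; rewrite (Rsum_ext _ (fun _ => 0)), Rsum_zero; [lra|].
    intros n _; rewrite (Rsum_ext _ (fun _ => 0)), Rsum_zero; auto.
    intros xy _; rewrite Hterm; apply Cabs_C0.
Qed.

Lemma funext3 (f g : C -> C -> C -> C) : (forall t z1 z2, f t z1 z2 = g t z1 z2) -> f = g.
Proof.
  intro H; apply functional_extensionality; intro t; apply functional_extensionality;
    intro z1; apply functional_extensionality; intro z2; auto.
Qed.

Lemma FourierVanishing_Csum {A : Type} (m : nat) (V : nat -> Z -> Prop)
  (F : A -> C -> C -> C -> C) (l : list A) :
  (forall e, In e l -> FourierVanishing m V (F e)) ->
  FourierVanishing m V (fun t z1 z2 => Csum (fun e => F e t z1 z2) l).
Proof.
  induction l as [|e l IH]; intro H; simpl; [apply FourierVanishing_zero|].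
  replace (fun t z1 z2 => Cadd (F e t z1 z2) (Csum (fun e => F e t z1 z2) l))
    with (lin3 C1 (F e) (fun t z1 z2 => Csum (fun e => F e t z1 z2) l))
    by (apply funext3; intros; unfold lin3; ring).
  apply FourierVanishing_lin; [apply H; simpl; auto|].
  apply IH; intros; apply H; simpl; auto.
Qed.

(* Multiplication by a unit [eta] acts on the indices [r = (x + iy)/2] through a
   norm-preserving bijection [rho] of [Z^2]. *)
Section IndexRotation.

Variables (rho rhoi : Z * Z -> Z * Z) (eta : C).
Hypothesis rho_rhoi : forall xy, rho (rhoi xy) = xy.
Hypothesis rhoi_rho : forall xy, rhoi (rho xy) = xy.
Hypothesis rho_norm : forall xy, normZ (rho xy) = normZ xy.
Hypothesis rho_rK : forall xy, rK (rho xy) = Cmul (rK xy) eta.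

Lemma K_range_rotation (m n : nat) : Permutation (map rho (K_range m n)) (K_range m n).
Proof.
  apply NoDup_Permutation.
  - apply FinFun.Injective_map_NoDup; [|apply NoDup_K_range].
    intros a b E; rewrite <- (rhoi_rho a), <- (rhoi_rho b), E; auto.
  - apply NoDup_K_range.
  - intros [x y]; rewrite in_map_iff; split.
    + intros [[a b] [E Hin]]; apply In_K_range in Hin; apply In_K_range.
      pose proof (rho_norm (a, b)) as N; rewrite E in N; unfold normZ in N; simpl in *; lia.
    + intro Hin; exists (rhoi (x, y)); split; auto.
      pose proof (rho_norm (rhoi (x, y))) as N; rewrite rho_rhoi in N.
      destruct (rhoi (x, y)) as [a b]; apply In_K_range; apply In_K_range in Hin.
      unfold normZ in N; simpl in *; lia.
Qed.

Lemma Csum_K_range_rotation (m n : nat) (F : Z * Z -> C) :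
  Csum F (K_range m n) = Csum (fun xy => F (rho xy)) (K_range m n).
Proof. rewrite <- (Csum_map F rho); apply Csum_perm, Permutation_sym, K_range_rotation. Qed.

Lemma Rsum_K_range_rotation (m n : nat) (F : Z * Z -> R) :
  Rsum F (K_range m n) = Rsum (fun xy => F (rho xy)) (K_range m n).
Proof. rewrite <- (Rsum_map F rho); apply Rsum_perm, Permutation_sym, K_range_rotation. Qed.

Lemma K_term_rotation (u : C) (c : nat -> Z * Z -> C) (t z1 z2 : C) (n : nat) (xy : Z * Z) :
  K_term (fun n xy => Cmul u (c n (rhoi xy))) t z1 z2 n (rho xy)
  = Cmul u (K_term c t (Cmul eta z1) (Cmul (Cconj eta) z2) n xy).
Proof.
  unfold K_term; rewrite rhoi_rho, rho_rK, Cconj_mul.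
  replace (Cadd (Cadd (Cmul (NtoC n) t) (Cmul (Cmul (rK xy) eta) z1))
                (Cmul (Cmul (Cconj (rK xy)) (Cconj eta)) z2))
    with (Cadd (Cadd (Cmul (NtoC n) t) (Cmul (rK xy) (Cmul eta z1)))
               (Cmul (Cconj (rK xy)) (Cmul (Cconj eta) z2))) by ring.
  ring.
Qed.

Lemma FourierVanishing_rotation (m k : nat) (V : nat -> Z -> Prop) (f : C -> C -> C -> C) :
  FourierVanishing m V f -> FourierVanishing m V (slashI k eta f).
Proof.
  intros [c [Hc Vc]].
  set (u := Cinv (Cpow eta k)).
  exists (fun n xy => Cmul u (c n (rhoi xy))); split.
  - intros t z1 z2 Ht.
    destruct (Hc t (Cmul eta z1) (Cmul (Cconj eta) z2) Ht) as [L [M BM]]; split.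
    + unfold slashI; fold u.
      eapply Ccv_ext; [|exact (Ccv_scal u _ _ L)].
      intro N; cbv beta; rewrite <- Csum_scal; apply Csum_ext; intros n _.
      rewrite <- Csum_scal, (Csum_K_range_rotation m n (K_term _ t z1 z2 n)).
      apply Csum_ext; intros xy _; symmetry; apply K_term_rotation.
    + exists (Cabs u * M); intro N.
      eapply Rle_trans; [|apply Rmult_le_compat_l; [apply Cabs_nonneg | apply (BM N)]].
      rewrite <- Rsum_scal; apply Rsum_le; intros n _.
      rewrite <- Rsum_scal, (Rsum_K_range_rotation m n (fun xy => Cabs (K_term _ t z1 z2 n xy))).
      apply Req_le, Rsum_ext; intros xy _.
      rewrite K_term_rotation; apply Cabs_mul.
  - intros n xy E; rewrite Vc; [ring|].
    rewrite <- (rho_norm (rhoi xy)), rho_rhoi; auto.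
Qed.

End IndexRotation.

Definition lattice_unit (eta : C) : Prop :=
  eta <> C0 /\ Cconj eta = Cinv eta /\
  forall a b, exists a' b', gauss a' b' = Cmul eta (gauss a b).

Lemma unitsOK_lattice_unit (eta : C) : In eta unitsOK -> lattice_unit eta.
Proof.
  intro Hin; simpl in Hin; destruct Hin as [<-|[<-|[<-|[<-|[]]]]];
    (split; [intro E; apply (f_equal (fun z => Re z * Re z + Im z * Im z)) in E;
             simpl in E; lra | split; [apply Ceq; unfold Cinv; cexpand; field|]]).
  - intros a b; exists a, b; ceq.
  - intros a b; exists (- a)%Z, (- b)%Z; apply Ceq; cexpand; rewrite !opp_IZR; ring.
  - intros a b; exists (- b)%Z, a; apply Ceq; cexpand; rewrite ?opp_IZR; ring.
  - intros a b; exists b, (- a)%Z; apply Ceq; cexpand; rewrite ?opp_IZR; ring.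
Qed.

(* Right multiplication by a unit permutes the units. *)
Lemma Csum_units_translate (F : C -> C) (eps : C) : In eps unitsOK ->
  Csum (fun eta => F (Cmul eta eps)) unitsOK = Csum F unitsOK.
Proof.
  assert (Hl : forall z, Cmul C1 z = z) by (intro; ring).
  assert (Hr : forall z, Cmul z C1 = z) by (intro; ring).
  assert (Hm1 : Cmul (Copp C1) (Copp C1) = C1) by ceq.
  assert (Hi2 : Cmul Ci Ci = Copp C1) by ceq.
  assert (Hmi2 : Cmul (Copp Ci) (Copp Ci) = Copp C1) by ceq.
  assert (Him : Cmul Ci (Copp Ci) = C1) by ceq.
  assert (Hmii : Cmul (Copp Ci) Ci = C1) by ceq.
  assert (Hm1i : Cmul (Copp C1) Ci = Copp Ci) by ceq.
  assert (Hm1mi : Cmul (Copp C1) (Copp Ci) = Ci) by ceq.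
  assert (Him1 : Cmul Ci (Copp C1) = Copp Ci) by ceq.
  assert (Hmim1 : Cmul (Copp Ci) (Copp C1) = Ci) by ceq.
  intro Hin; simpl in Hin; cbn [Csum fold_right unitsOK].
  destruct Hin as [<-|[<-|[<-|[<-|[]]]]];
    rewrite ?Hl, ?Hr, ?Hm1, ?Hi2, ?Hmi2, ?Him, ?Hmii, ?Hm1i, ?Hm1mi, ?Him1, ?Hmim1; ring.
Qed.

(* Each unit acts on the indices [r = (x + iy)/2] by a rotation of [Z^2]. *)
Lemma FourierVanishing_slashI (m k : nat) (V : nat -> Z -> Prop) (eta : C)
  (f : C -> C -> C -> C) :
  In eta unitsOK -> FourierVanishing m V f -> FourierVanishing m V (slashI k eta f).
Proof.
  intro Hin; simpl in Hin; destruct Hin as [<-|[<-|[<-|[<-|[]]]]].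
  - apply (FourierVanishing_rotation (fun xy => xy) (fun xy => xy) C1); auto; intros; ceq.
  - apply (FourierVanishing_rotation (fun xy => (- fst xy, - snd xy)%Z)
             (fun xy => (- fst xy, - snd xy)%Z) (Copp C1)); intros [x y]; simpl;
      try (f_equal; ring); try (unfold normZ; simpl; ring).
    apply Ceq; cexpand; rewrite !opp_IZR; field.
  - apply (FourierVanishing_rotation (fun xy => (- snd xy, fst xy)%Z)
             (fun xy => (snd xy, - fst xy)%Z) Ci); intros [x y]; simpl;
      try (f_equal; ring); try (unfold normZ; simpl; ring).
    apply Ceq; cexpand; rewrite ?opp_IZR; field.
  - apply (FourierVanishing_rotation (fun xy => (snd xy, - fst xy)%Z)
             (fun xy => (- snd xy, fst xy)%Z) (Copp Ci)); intros [x y]; simpl;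
      try (f_equal; ring); try (unfold normZ; simpl; ring).
    apply Ceq; cexpand; rewrite ?opp_IZR; field.
Qed.

(** * The product [psi(t, w1, w2) = phi1(t, (w1 + w2)/2) phi2(t, i(w1 - w2)/2)] *)

Definition half : C := mkC (1/2) 0.
Definition half_i : C := mkC 0 (1/2).

Definition psi (p1 p2 : C -> C -> C) : C -> C -> C -> C :=
  fun t w1 w2 => Cmul (p1 t (Cmul half (Cadd w1 w2))) (p2 t (Cmul half_i (Csub w1 w2))).

Lemma Hmap_psi (k1 k2 : nat) (p1 p2 : C -> C -> C) :
  Hmap k1 k2 p1 p2 = fun t z1 z2 => Csum (fun e => slashI (k1 + k2) e (psi p1 p2) t z1 z2) unitsOK.
Proof. reflexivity. Qed.

Lemma psi_holo (p1 p2 : C -> C -> C) : holo2 p1 -> holo2 p2 -> holo3 (psi p1 p2).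
Proof.
  intros H1 H2.
  assert (Hhalf : half <> C0) by (intro E; apply (f_equal Re) in E; simpl in E; lra).
  assert (Hhalf_i : half_i <> C0) by (intro E; apply (f_equal Im) in E; simpl in E; lra).
  replace (psi p1 p2) with (fun t w1 w2 =>
    Cmul (p1 t (Cadd (Cmul half w1) (Cmul half w2)))
         (p2 t (Cadd (Cmul half_i w1) (Cmul (Copp half_i) w2))))
    by (apply funext3; intros; unfold psi; do 2 f_equal; ring).
  apply (holo3_mul (fun t w1 w2 => p1 t (Cadd (Cmul half w1) (Cmul half w2)))
                   (fun t w1 w2 => p2 t (Cadd (Cmul half_i w1) (Cmul (Copp half_i) w2))));
    apply holo3_linear_form; auto.
  intro E; apply Hhalf_i; replace half_i with (Copp (Copp half_i)) by ring; rewrite E; ring.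
Qed.

(* The coefficient at [(n, r)], [r = (x + iy)/2], of the product of the classical
   expansions: a sum over the splittings [n = j + (n - j)] with [x^2 <= 4jm]
   and [y^2 <= 4(n - j)m]. *)
Definition coeff_product (m : nat) (c1 c2 : nat -> Z -> C) (n : nat) (xy : Z * Z) : C :=
  Csum (fun j => if split_index m n j xy then Cmul (c1 j (fst xy)) (c2 (n - j)%nat (snd xy))
                 else C0) (seq 0 (S n)).

Lemma cl_term_product (c1 c2 : nat -> Z -> C) (t z1 z2 : C) (n j : nat) (x y : Z) :
  (j <= n)%nat ->
  Cmul (cl_term c1 t (Cmul half (Cadd z1 z2)) j x)
       (cl_term c2 t (Cmul half_i (Csub z1 z2)) (n - j) y)
  = Cmul (Cmul (c1 j x) (c2 (n - j)%nat y))
      (ee (Cadd (Cadd (Cmul (NtoC n) t) (Cmul (rK (x, y)) z1)) (Cmul (Cconj (rK (x, y))) z2))).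
Proof.
  intro Hj; unfold cl_term.
  replace (NtoC n) with (Cadd (NtoC j) (NtoC (n - j)))
    by (apply Ceq; cexpand; rewrite ?minus_INR by lia; ring).
  transitivity (Cmul (Cmul (c1 j x) (c2 (n - j)%nat y))
     (ee (Cadd (Cadd (Cmul (NtoC j) t) (Cmul (ZtoC x) (Cmul half (Cadd z1 z2))))
               (Cadd (Cmul (NtoC (n - j)) t) (Cmul (ZtoC y) (Cmul half_i (Csub z1 z2))))))).
  - rewrite (ee_add (Cadd (Cmul (NtoC j) t) _)); ring.
  - f_equal; f_equal; unfold half, half_i; destruct z1, z2; apply Ceq; cexpand; field.
Qed.

Lemma K_term_coeff_product (m : nat) (c1 c2 : nat -> Z -> C) (t z1 z2 : C) (n : nat)
  (xy : Z * Z) :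
  K_term (coeff_product m c1 c2) t z1 z2 n xy =
  Csum (fun j => if split_index m n j xy then
     Cmul (cl_term c1 t (Cmul half (Cadd z1 z2)) j (fst xy))
          (cl_term c2 t (Cmul half_i (Csub z1 z2)) (n - j) (snd xy))
     else C0) (seq 0 (S n)).
Proof.
  unfold K_term, coeff_product; rewrite <- Csum_scal_r; apply Csum_ext; intros j Hj.
  apply in_seq in Hj; destruct (split_index m n j xy); [|ring].
  rewrite cl_term_product by lia; destruct xy; reflexivity.
Qed.

Lemma Csum_split_index (g h : nat -> Z -> C) (m n : nat) :
  Csum (fun xy => Csum (fun j => if split_index m n j xy
                                 then Cmul (g j (fst xy)) (h (n - j)%nat (snd xy)) else C0)
                       (seq 0 (S n))) (K_range m n)
  = Csum (fun j => Cmul (Csum (g j) (cl_range m j)) (Csum (h (n - j)%nat) (cl_range m (n - j))))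
         (seq 0 (S n)).
Proof.
  rewrite Csum_swap; apply Csum_ext; intros j Hj; apply in_seq in Hj.
  rewrite (Csum_filter (split_index m n j)
             (fun xy => Cmul (g j (fst xy)) (h (n - j)%nat (snd xy)))).
  rewrite (Csum_perm _ _ _ (K_range_split m n j ltac:(lia))); apply Csum_prod.
Qed.

Lemma Rsum_split_index (g h : nat -> Z -> R) (m n : nat) :
  Rsum (fun xy => Rsum (fun j => if split_index m n j xy
                                 then g j (fst xy) * h (n - j)%nat (snd xy) else 0)
                       (seq 0 (S n))) (K_range m n)
  = Rsum (fun j => Rsum (g j) (cl_range m j) * Rsum (h (n - j)%nat) (cl_range m (n - j)))
         (seq 0 (S n)).
Proof.
  rewrite Rsum_swap; apply Rsum_ext; intros j Hj; apply in_seq in Hj.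
  rewrite (Rsum_filter (split_index m n j) (fun xy => g j (fst xy) * h (n - j)%nat (snd xy))).
  rewrite (Rsum_perm _ _ _ (K_range_split m n j ltac:(lia))); apply Rsum_prod.
Qed.

Lemma K_sum_coeff_product (m : nat) (c1 c2 : nat -> Z -> C) (t z1 z2 : C) (n : nat) :
  Csum (K_term (coeff_product m c1 c2) t z1 z2 n) (K_range m n)
  = Csum (fun j => Cmul (Csum (cl_term c1 t (Cmul half (Cadd z1 z2)) j) (cl_range m j))
                        (Csum (cl_term c2 t (Cmul half_i (Csub z1 z2)) (n - j)) (cl_range m (n - j))))
         (seq 0 (S n)).
Proof.
  rewrite (Csum_ext _ _ _ (fun xy _ => K_term_coeff_product m c1 c2 t z1 z2 n xy)).
  apply Csum_split_index.
Qed.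

Lemma K_abs_sum_coeff_product (m : nat) (c1 c2 : nat -> Z -> C) (t z1 z2 : C) (n : nat) :
  Rsum (fun xy => Cabs (K_term (coeff_product m c1 c2) t z1 z2 n xy)) (K_range m n)
  <= Rsum (fun j =>
        Rsum (fun x => Cabs (cl_term c1 t (Cmul half (Cadd z1 z2)) j x)) (cl_range m j) *
        Rsum (fun y => Cabs (cl_term c2 t (Cmul half_i (Csub z1 z2)) (n - j) y)) (cl_range m (n - j)))
       (seq 0 (S n)).
Proof.
  rewrite <- (Rsum_split_index (fun j x => Cabs (cl_term c1 t (Cmul half (Cadd z1 z2)) j x))
                               (fun j y => Cabs (cl_term c2 t (Cmul half_i (Csub z1 z2)) j y))).
  apply Rsum_le; intros xy _; rewrite K_term_coeff_product.
  eapply Rle_trans; [apply Cabs_Csum|]; apply Req_le, Rsum_ext; intros j _.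
  destruct (split_index m n j xy); [apply Cabs_mul | apply Cabs_C0].
Qed.

(* The expansion of [psi] is the Cauchy product of the two classical expansions. *)
Lemma psi_HasFourier (m : nat) (p1 p2 : C -> C -> C) (c1 c2 : nat -> Z -> C) :
  HasFourier_cl m p1 c1 -> HasFourier_cl m p2 c2 ->
  HasFourier_K m (psi p1 p2) (coeff_product m c1 c2).
Proof.
  intros H1 H2 t z1 z2 Ht.
  set (W1 := Cmul half (Cadd z1 z2)); set (W2 := Cmul half_i (Csub z1 z2)).
  destruct (H1 t W1 Ht) as [L1 [M1 B1]], (H2 t W2 Ht) as [L2 [M2 B2]].
  set (a := fun j => Rsum (fun x => Cabs (cl_term c1 t W1 j x)) (cl_range m j)).
  set (b := fun j => Rsum (fun x => Cabs (cl_term c2 t W2 j x)) (cl_range m j)).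
  split.
  - eapply Ccv_ext; [|exact (cauchy_product _ _ _ _ M1 L1 L2
                               (fun N => Rle_trans _ _ _ (Rsum_le _ _ _
                                  (fun j _ => Cabs_Csum _ _)) (B1 N)))].
    intro N; apply Csum_ext; intros n _; symmetry; apply K_sum_coeff_product.
  - exists (M1 * M2); intro N.
    assert (Ha0 : forall j, 0 <= a j) by (intro; apply Rsum_nonneg; intros; apply Cabs_nonneg).
    assert (HM2 : 0 <= M2).
    { pose proof (B2 O) as HB; change (Rsum b (seq 0 1) <= M2) in HB; simpl in HB.
      assert (0 <= b O) by (apply Rsum_nonneg; intros; apply Cabs_nonneg); lra. }
    eapply Rle_trans; [apply Rsum_le; intros n _; apply K_abs_sum_coeff_product|].
    change (rps (fun n => Rsum (fun j => a j * b (n - j)%nat) (seq 0 (S n))) N <= M1 * M2).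
    rewrite rps_convolution.
    eapply Rle_trans; [apply (Rsum_le _ (fun j => M2 * a j)); intros j _;
                       rewrite Rmult_comm; apply Rmult_le_compat_r; [apply Ha0 | apply B2]|].
    rewrite Rsum_scal, Rmult_comm; apply Rmult_le_compat_r; [exact HM2 | apply B1].
Qed.

(* A boundary index [x^2 + y^2 = 4nm] only splits into boundary indices, so the
   product coefficients vanish there as soon as those of [phi1] do. *)
Lemma coeff_product_cusp (m : nat) (c1 c2 : nat -> Z -> C) :
  (forall n r, (4 * Z.of_nat n * Z.of_nat m = r * r)%Z -> c1 n r = C0) ->
  forall n xy, normZ xy = (4 * Z.of_nat n * Z.of_nat m)%Z -> coeff_product m c1 c2 n xy = C0.
Proof.
  intros H n [x y] E; unfold normZ in E; cbn [fst snd] in E; unfold coeff_product.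
  rewrite (Csum_ext _ (fun _ => C0)); [apply Csum_zero|].
  intros j Hj; apply in_seq in Hj; unfold split_index; cbn [fst snd].
  destruct (Z.leb_spec (x * x) (4 * Z.of_nat j * Z.of_nat m)); cbn [andb]; auto.
  destruct (Z.leb_spec (y * y) (4 * Z.of_nat (n - j) * Z.of_nat m)); cbn [andb]; auto.
  rewrite Nat2Z.inj_sub in * by lia; rewrite H; [ring | nia].
Qed.

(** * Invariance under [SL(2, Z)] and the Heisenberg group *)

Definition jacobi_invariant (k m : nat) (f : C -> C -> C -> C) : Prop :=
  (forall a b c d : Z, (a * d - b * c = 1)%Z ->
     forall t z1 z2, inH t -> slashK k m C1 a b c d f t z1 z2 = f t z1 z2) /\
  (forall a b a' b' : Z, forall t z1 z2, inH t ->
     heisK m (gauss a b) (gauss a' b') f t z1 z2 = f t z1 z2).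

Lemma automorphy_factor_nz (a b c d : Z) (t : C) : (a * d - b * c = 1)%Z -> inH t ->
  Cadd (Cmul (ZtoC c) t) (ZtoC d) <> C0.
Proof.
  intros Hdet Ht E; unfold inH in Ht.
  pose proof (f_equal Re E) as E1; pose proof (f_equal Im E) as E2.
  destruct t as [x y]; cexpand; simpl in *.
  assert (IZR c = 0) as Hc by nra; apply eq_IZR in Hc; subst c.
  assert (IZR d = 0) as Hd by nra; apply eq_IZR in Hd; subst d; lia.
Qed.

Lemma Cinv_C1 : Cinv C1 = C1.
Proof. apply Ceq; unfold Cinv; simpl; field. Qed.

Lemma Cconj_C1 : Cconj C1 = C1.
Proof. ceq. Qed.

Lemma slashK_slashI (k m : nat) (eta eps : C) (a b c d : Z) (f : C -> C -> C -> C)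
  (t z1 z2 : C) :
  lattice_unit eta -> lattice_unit eps -> Cadd (Cmul (ZtoC c) t) (ZtoC d) <> C0 ->
  slashK k m eps a b c d (slashI k eta f) t z1 z2
  = slashI k (Cmul eta eps) (slashK k m C1 a b c d f) t z1 z2.
Proof.
  intros [Heta [Hceta _]] [Heps [Hceps _]] Hj.
  set (j := Cadd (Cmul (ZtoC c) t) (ZtoC d)) in *.
  pose proof (Cpow_nz eta k Heta); pose proof (Cpow_nz eps k Heps); pose proof (Cpow_nz j k Hj).
  unfold slashK, slashI; fold j.
  rewrite Cconj_mul, Hceta, Hceps, Cconj_C1, Cpow_C1, Cinv_C1, Cpow_mul.
  replace (Cmul (Cmul (Cmul eta eps) z1) (Cmul (Cmul (Cinv eta) (Cinv eps)) z2))
    with (Cmul z1 z2) by (field; auto).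
  replace (Cdiv (Cmul C1 (Cmul (Cmul eta eps) z1)) j) with (Cmul eta (Cdiv (Cmul eps z1) j))
    by (unfold Cdiv; ring).
  replace (Cdiv (Cmul C1 (Cmul (Cmul (Cinv eta) (Cinv eps)) z2)) j)
    with (Cmul (Cinv eta) (Cdiv (Cmul (Cinv eps) z2) j)) by (unfold Cdiv; ring).
  field; repeat split; auto.
Qed.

Lemma heisK_slashI (k m : nat) (eta l mu l' mu' : C) (f : C -> C -> C -> C) (t z1 z2 : C) :
  lattice_unit eta -> l' = Cmul eta l -> mu' = Cmul eta mu ->
  heisK m l mu (slashI k eta f) t z1 z2 = slashI k eta (heisK m l' mu' f) t z1 z2.
Proof.
  intros [Heta [Hc _]] -> ->; unfold heisK, slashI, Nrm.
  rewrite !Cconj_mul, Hc.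
  replace (Cmul eta (Cadd (Cadd z1 (Cmul l t)) mu))
    with (Cadd (Cadd (Cmul eta z1) (Cmul (Cmul eta l) t)) (Cmul eta mu)) by ring.
  replace (Cmul (Cinv eta) (Cadd (Cadd z2 (Cmul (Cconj l) t)) (Cconj mu)))
    with (Cadd (Cadd (Cmul (Cinv eta) z2) (Cmul (Cmul (Cinv eta) (Cconj l)) t))
               (Cmul (Cinv eta) (Cconj mu))) by ring.
  replace (Cadd (Cadd (Cmul (Cmul (Cmul eta l) (Cmul (Cinv eta) (Cconj l))) t)
                      (Cmul (Cmul (Cinv eta) (Cconj l)) (Cmul eta z1)))
                (Cmul (Cmul eta l) (Cmul (Cinv eta) z2)))
    with (Cadd (Cadd (Cmul (Cmul l (Cconj l)) t) (Cmul (Cconj l) z1)) (Cmul l z2))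
    by (field; auto).
  ring.
Qed.

Lemma jacobi_invariant_slashI (k m : nat) (eta : C) (f : C -> C -> C -> C) :
  lattice_unit eta -> jacobi_invariant k m f -> jacobi_invariant k m (slashI k eta f).
Proof.
  intros Heta [HS HH]; split.
  - intros a b c d Hdet t z1 z2 Ht.
    assert (H1 : lattice_unit C1) by (apply unitsOK_lattice_unit; simpl; auto).
    rewrite slashK_slashI by (auto; apply (automorphy_factor_nz a b c d); auto).
    replace (Cmul eta C1) with eta by ring; unfold slashI; rewrite HS; auto.
  - intros a b a' b' t z1 z2 Ht.
    destruct (proj2 (proj2 Heta) a b) as [a2 [b2 E]].
    destruct (proj2 (proj2 Heta) a' b') as [a3 [b3 E']].
    rewrite (heisK_slashI k m eta _ _ (gauss a2 b2) (gauss a3 b3)); auto.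
    unfold slashI; rewrite HH; auto.
Qed.

Lemma jacobi_invariant_Csum {A : Type} (k m : nat) (F : A -> C -> C -> C -> C) (l : list A) :
  (forall e, In e l -> jacobi_invariant k m (F e)) ->
  jacobi_invariant k m (fun t z1 z2 => Csum (fun e => F e t z1 z2) l).
Proof.
  intro H; split.
  - intros a b c d Hdet t z1 z2 Ht; unfold slashK; rewrite <- !Csum_scal.
    apply Csum_ext; intros e He; destruct (H e He) as [HS _].
    rewrite <- (HS a b c d Hdet t z1 z2 Ht); reflexivity.
  - intros a b a' b' t z1 z2 Ht; unfold heisK; rewrite <- Csum_scal.
    apply Csum_ext; intros e He; destruct (H e He) as [_ HH].
    rewrite <- (HH a b a' b' t z1 z2 Ht); reflexivity.
Qed.

Lemma LambdaK_unit_invariant (k m : nat) (phi : C -> C -> C -> C) :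
  jacobi_invariant k m phi ->
  forall eps, In eps unitsOK -> forall a b c d : Z, (a * d - b * c = 1)%Z ->
  forall t z1 z2, inH t -> slashK k m eps a b c d (LambdaK k phi) t z1 z2 = LambdaK k phi t z1 z2.
Proof.
  intros [HS _] eps Heps a b c d Hdet t z1 z2 Ht.
  assert (Hj := automorphy_factor_nz a b c d t Hdet Ht).
  transitivity (Csum (fun eta => slashK k m eps a b c d (slashI k eta phi) t z1 z2) unitsOK).
  - unfold slashK, LambdaK; rewrite <- !Csum_scal; reflexivity.
  - rewrite (Csum_ext _ (fun eta => slashI k (Cmul eta eps) phi t z1 z2)).
    + unfold LambdaK; apply (Csum_units_translate (fun u => slashI k u phi t z1 z2)); auto.
    + intros eta Heta; rewrite slashK_slashI by (auto; apply unitsOK_lattice_unit; auto).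
      unfold slashI; rewrite HS; auto.
Qed.

(* Solving the classical transformation laws for the transformed value. *)
Lemma solve_slash (P A X Y : C) : P <> C0 ->
  Cmul (Cinv P) (Cmul (ee (Copp A)) X) = Y -> X = Cmul (Cmul P (ee A)) Y.
Proof.
  intros HP <-.
  transitivity (Cmul (Cmul (Cinv P) P) (Cmul (Cmul (ee (Copp A)) (ee A)) X)).
  - rewrite ee_opp, Cinv_l; auto; ring.
  - ring.
Qed.

Lemma solve_heis (A X Y : C) : Cmul (ee A) X = Y -> X = Cmul (ee (Copp A)) Y.
Proof.
  intros <-; transitivity (Cmul (Cmul (ee (Copp A)) (ee A)) X); [rewrite ee_opp|]; ring.
Qed.

(* [psi] transforms under [M] with weight [k1 + k2], since the indices add:
   [m w1^2 + m w2^2 = m z1 z2] for [w1 = (z1 + z2)/2], [w2 = i(z1 - z2)/2]. *)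
Lemma psi_slash_invariant (k1 k2 m : nat) (p1 p2 : C -> C -> C) :
  jacobi_cl_inv k1 m p1 -> jacobi_cl_inv k2 m p2 ->
  forall a b c d : Z, (a * d - b * c = 1)%Z -> forall t z1 z2, inH t ->
  slashK (k1 + k2) m C1 a b c d (psi p1 p2) t z1 z2 = psi p1 p2 t z1 z2.
Proof.
  intros [_ [S1 _]] [_ [S2 _]] a b c d Hdet t z1 z2 Ht; unfold slashK, psi.
  set (j := Cadd (Cmul (ZtoC c) t) (ZtoC d)).
  assert (Hj : j <> C0) by (apply (automorphy_factor_nz a b c d t); auto).
  set (W1 := Cmul half (Cadd z1 z2)); set (W2 := Cmul half_i (Csub z1 z2)).
  pose proof (S1 a b c d Hdet t W1 Ht) as E1; pose proof (S2 a b c d Hdet t W2 Ht) as E2.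
  unfold slash_cl in E1, E2; fold j in E1, E2.
  apply solve_slash in E1; [|apply Cpow_nz; auto].
  apply solve_slash in E2; [|apply Cpow_nz; auto].
  replace (Cmul half (Cadd (Cdiv (Cmul C1 z1) j) (Cdiv (Cmul (Cconj C1) z2) j))) with (Cdiv W1 j)
    by (unfold W1, Cdiv; rewrite Cconj_C1; ring).
  replace (Cmul half_i (Csub (Cdiv (Cmul C1 z1) j) (Cdiv (Cmul (Cconj C1) z2) j)))
    with (Cdiv W2 j) by (unfold W2, Cdiv; rewrite Cconj_C1; ring).
  rewrite E1, E2, Cpow_C1, Cinv_C1, Cpow_add.
  set (q := Cmul (NtoC m) (ZtoC c)).
  assert (EE : Cmul (ee (Copp (Cdiv (Cmul q (Cmul z1 z2)) j)))
                    (Cmul (ee (Cdiv (Cmul q (Cmul W1 W1)) j)) (ee (Cdiv (Cmul q (Cmul W2 W2)) j)))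
               = C1).
  { rewrite <- !ee_add, <- ee_0; f_equal.
    unfold W1, W2, Cdiv, half, half_i; generalize (Cinv j); intro u.
    destruct z1, z2, u; apply Ceq; cexpand; field. }
  assert (Hjk := Cmul_nz _ _ (Cpow_nz j k1 Hj) (Cpow_nz j k2 Hj)).
  transitivity (Cmul (Cmul (Cmul (Cinv (Cmul (Cpow j k1) (Cpow j k2))) (Cmul (Cpow j k1) (Cpow j k2)))
        (Cmul (ee (Copp (Cdiv (Cmul q (Cmul z1 z2)) j)))
              (Cmul (ee (Cdiv (Cmul q (Cmul W1 W1)) j)) (ee (Cdiv (Cmul q (Cmul W2 W2)) j)))))
     (Cmul (p1 t W1) (p2 t W2))).
  - ring.
  - rewrite EE, Cinv_l by auto; ring.
Qed.

(* [[lambda, mu]] with [lambda = a + ib], [mu = a' + ib'] acts on [w1] as the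
   classical [[a, a']] and on [w2] as [[-b, -b']]. *)
Lemma psi_heis_invariant (k1 k2 m : nat) (p1 p2 : C -> C -> C) :
  jacobi_cl_inv k1 m p1 -> jacobi_cl_inv k2 m p2 ->
  forall a b a' b' : Z, forall t z1 z2, inH t ->
  heisK m (gauss a b) (gauss a' b') (psi p1 p2) t z1 z2 = psi p1 p2 t z1 z2.
Proof.
  intros [_ [_ H1]] [_ [_ H2]] a b a' b' t z1 z2 Ht; unfold heisK, psi.
  set (W1 := Cmul half (Cadd z1 z2)); set (W2 := Cmul half_i (Csub z1 z2)).
  pose proof (H1 a a' t W1 Ht) as E1; pose proof (H2 (- b)%Z (- b')%Z t W2 Ht) as E2.
  unfold heis_cl in E1, E2; apply solve_heis in E1; apply solve_heis in E2.
  replace (Cmul half (Cadd (Cadd (Cadd z1 (Cmul (gauss a b) t)) (gauss a' b'))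
                           (Cadd (Cadd z2 (Cmul (Cconj (gauss a b)) t)) (Cconj (gauss a' b')))))
    with (Cadd (Cadd W1 (Cmul (ZtoC a) t)) (ZtoC a'))
    by (unfold W1, half; destruct z1, z2, t; apply Ceq; cexpand; field).
  replace (Cmul half_i (Csub (Cadd (Cadd z1 (Cmul (gauss a b) t)) (gauss a' b'))
                             (Cadd (Cadd z2 (Cmul (Cconj (gauss a b)) t)) (Cconj (gauss a' b')))))
    with (Cadd (Cadd W2 (Cmul (ZtoC (- b)) t)) (ZtoC (- b')))
    by (unfold W2, half_i; destruct z1, z2, t; apply Ceq; cexpand; rewrite ?opp_IZR; field).
  rewrite E1, E2.
  set (B1 := Cmul (NtoC m) (Cadd (Cmul (ZtoC (a * a)) t) (Cmul (ZtoC (2 * a)) W1))).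
  set (B2 := Cmul (NtoC m) (Cadd (Cmul (ZtoC (- b * - b)) t) (Cmul (ZtoC (2 * - b)) W2))).
  set (B := Cmul (NtoC m) (Cadd (Cadd (Cmul (Nrm (gauss a b)) t) (Cmul (Cconj (gauss a b)) z1))
                               (Cmul (gauss a b) z2))).
  assert (EE : Cmul (ee B) (Cmul (ee (Copp B1)) (ee (Copp B2))) = C1).
  { rewrite <- !ee_add, <- ee_0; f_equal.
    unfold B, B1, B2, W1, W2, half, half_i; destruct z1, z2, t; apply Ceq; cexpand;
      rewrite ?mult_IZR, ?opp_IZR; field. }
  transitivity (Cmul (Cmul (ee B) (Cmul (ee (Copp B1)) (ee (Copp B2)))) (Cmul (p1 t W1) (p2 t W2)));
    [ring | rewrite EE; ring].
Qed.

Lemma LambdaK_lin (k : nat) (a : C) (phi psi' : C -> C -> C -> C) :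
  LambdaK k (lin3 a phi psi') = lin3 a (LambdaK k phi) (LambdaK k psi').
Proof.
  apply funext3; intros; unfold LambdaK, lin3; rewrite <- Csum_lin.
  apply Csum_ext; intros; unfold slashI; ring.
Qed.

Lemma Hmap_lin_l (k1 k2 : nat) (a : C) (phi1 phi1' phi2 : C -> C -> C) :
  Hmap k1 k2 (lin2 a phi1 phi1') phi2 = lin3 a (Hmap k1 k2 phi1 phi2) (Hmap k1 k2 phi1' phi2).
Proof.
  apply funext3; intros; unfold Hmap, lin3, lin2; rewrite <- Csum_lin.
  apply Csum_ext; intros; unfold slashI; ring.
Qed.

Lemma Hmap_lin_r (k1 k2 : nat) (a : C) (phi1 phi2 phi2' : C -> C -> C) :
  Hmap k1 k2 phi1 (lin2 a phi2 phi2') = lin3 a (Hmap k1 k2 phi1 phi2) (Hmap k1 k2 phi1 phi2').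
Proof.
  apply funext3; intros; unfold Hmap, lin3, lin2; rewrite <- Csum_lin.
  apply Csum_ext; intros; unfold slashI; ring.
Qed.

Lemma LambdaK_form (k m : nat) (V : nat -> Z -> Prop) (phi : C -> C -> C -> C) :
  holo3 phi -> jacobi_invariant k m phi -> FourierVanishing m V phi ->
  jacobiK_inv unitsOK k m (LambdaK k phi) /\ FourierVanishing m V (LambdaK k phi).
Proof.
  intros Hh Hi Hf; split; [split; [|split]|].
  - apply (holo3_Csum (fun e => slashI k e phi)); intros e He.
    apply holo3_slashI; auto; apply unitsOK_lattice_unit; auto.
  - intros eps Heps; apply LambdaK_unit_invariant; auto.
  - apply (jacobi_invariant_Csum k m (fun e => slashI k e phi)); intros e He.
    apply jacobi_invariant_slashI; auto; apply unitsOK_lattice_unit; auto.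
  - apply (FourierVanishing_Csum m V (fun e => slashI k e phi)); intros e He.
    apply FourierVanishing_slashI; auto.
Qed.

Lemma Hmap_form (k1 k2 m : nat) (V : nat -> Z -> Prop) (p1 p2 : C -> C -> C) :
  jacobi_cl_inv k1 m p1 -> jacobi_cl_inv k2 m p2 -> FourierVanishing m V (psi p1 p2) ->
  holo3 (Hmap k1 k2 p1 p2) /\ jacobi_invariant (k1 + k2) m (Hmap k1 k2 p1 p2) /\
  FourierVanishing m V (Hmap k1 k2 p1 p2).
Proof.
  intros J1 J2 Hf; rewrite Hmap_psi; split; [|split].
  - apply (holo3_Csum (fun e => slashI (k1 + k2) e (psi p1 p2))); intros e He.
    apply holo3_slashI; [apply unitsOK_lattice_unit; auto|].
    apply psi_holo; [apply J1 | apply J2].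
  - apply (jacobi_invariant_Csum (k1 + k2) m (fun e => slashI (k1 + k2) e (psi p1 p2))).
    intros e He; apply jacobi_invariant_slashI; [apply unitsOK_lattice_unit; auto|].
    split; [apply (psi_slash_invariant k1 k2) | apply (psi_heis_invariant k1 k2)]; auto.
  - apply (FourierVanishing_Csum m V (fun e => slashI (k1 + k2) e (psi p1 p2))).
    intros e He; apply FourierVanishing_slashI; auto.
Qed.

Definition cusp_index (m n : nat) (N : Z) : Prop := N = (4 * Z.of_nat n * Z.of_nat m)%Z.

Theorem corollary4p6 (k1 k2 m : nat) (hk1 : (0 < k1)%nat) (hk2 : (0 < k2)%nat)
  (hm : (0 < m)%nat) :
  (forall phi, JacobiForm1_K (k1 + k2) m phi ->
     JacobiForm_K (k1 + k2) m (LambdaK (k1 + k2) phi)) /\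
  (forall a phi psi,
     LambdaK (k1 + k2) (lin3 a phi psi)
     = lin3 a (LambdaK (k1 + k2) phi) (LambdaK (k1 + k2) psi)) /\
  (forall phi1 phi2, JacobiForm_cl k1 m phi1 -> JacobiForm_cl k2 m phi2 ->
     JacobiForm1_K (k1 + k2) m (Hmap k1 k2 phi1 phi2)) /\
  (forall a phi1 phi1' phi2,
     Hmap k1 k2 (lin2 a phi1 phi1') phi2
     = lin3 a (Hmap k1 k2 phi1 phi2) (Hmap k1 k2 phi1' phi2)) /\
  (forall a phi1 phi2 phi2',
     Hmap k1 k2 phi1 (lin2 a phi2 phi2')
     = lin3 a (Hmap k1 k2 phi1 phi2) (Hmap k1 k2 phi1 phi2')) /\
  (forall phi1 phi2, JacobiCusp_cl k1 m phi1 -> JacobiCusp_cl k2 m phi2 ->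
     JacobiCusp_K (k1 + k2) m (LambdaK (k1 + k2) (Hmap k1 k2 phi1 phi2))).
Proof.
  set (no_condition := fun (_ : nat) (_ : Z) => False).
  split; [|split; [|split; [|split; [|split]]]].
  - intros phi [[Hh [HS HH]] [c Hc]].
    assert (Hf : FourierVanishing m no_condition phi) by (exists c; split; [auto | contradiction]).
    destruct (LambdaK_form (k1 + k2) m no_condition phi Hh) as [HJ [c' [Hc' _]]]; auto.
    + split; [apply HS | exact HH]; simpl; auto.
    + split; [exact HJ | exists c'; exact Hc'].
  - intros; apply LambdaK_lin.
  - intros p1 p2 [J1 [c1 F1]] [J2 [c2 F2]].
    assert (Hf : FourierVanishing m no_condition (psi p1 p2))
      by (exists (coeff_product m c1 c2); split; [apply psi_HasFourier; auto | contradiction]).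
    destruct (Hmap_form k1 k2 m no_condition p1 p2 J1 J2 Hf) as [Hh [[HS HH] [c [Hc _]]]].
    split; [split; [exact Hh | split; [intros eps [<-|[]] | exact HH]] | exists c]; auto.
  - intros; apply Hmap_lin_l.
  - intros; apply Hmap_lin_r.
  - intros p1 p2 [J1 [c1 [F1 V1]]] [J2 [c2 [F2 _]]].
    assert (Hf : FourierVanishing m (cusp_index m) (psi p1 p2)).
    { exists (coeff_product m c1 c2); split; [apply psi_HasFourier; auto|].
      apply coeff_product_cusp; auto. }
    destruct (Hmap_form k1 k2 m (cusp_index m) p1 p2 J1 J2 Hf) as [Hh [Hi HV]].
    destruct (LambdaK_form (k1 + k2) m (cusp_index m) _ Hh Hi HV) as [HJ HC].
    split; [exact HJ | exact HC].
Qed.
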